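(* Let $S$ be a scoring function with $\|S\|_\delta>0$. Then for all $n$ large enough, $$P\left(\frac{L_n(S)}{n}\geq\lambda(S)-\frac{\ln(n)}{\sqrt n}\right)\geq 1-n^{-\alpha_1\ln(n)},\qquad \alpha_1=\frac{1}{8\|S\|_\delta^2}.$$
   Context: Let $\mathcal{A}$ be a finite alphabet and $\mathcal{A}^*=\mathcal{A}\cup\{G\}$, where $G$ is a gap symbol. A scoring function is a symmetric map $S:\mathcal{A}^*\times\mathcal{A}^*\to\mathbb{R}$, and $\|S\|_\delta=\max_{c,d,e\in\mathcal{A}^*}|S(c,d)-S(c,e)|$. For strings $x=x_1\dots x_m$, $y=y_1\dots y_{m'}$ over $\mathcal{A}$, an alignment $\pi$ is a sequence $((\mu_1,\nu_1),\dots,(\mu_k,\nu_k))$, $k\ge0$, with $1\le\mu_1<\dots<\mu_k\le m$ and $1\le\nu_1<\dots<\nu_k\le m'$; its score is $S_\pi(x,y)=\sum_{i=1}^k S(x_{\mu_i},y_{\nu_i})+\sum_{j\notin\{\mu_i\}}S(x_j,G)+\sum_{j\notin\{\nu_i\}}S(G,y_j)$, and $L_S(x,y)=\max_\pi S_\pi(x,y)$. Let $X=X_1\dots X_n$, $Y=Y_1\dots Y_n$ where all $2n$ letters are i.i.d. with values in $\mathcal{A}$. Put $L_n(S)=L_S(X,Y)$, $\lambda_n(S)=E[L_n(S)]/n$, $\lambda(S)=\lim_n\lambda_n(S)$. *)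

From Stdlib Require Import Reals List.
Import ListNotations.
Open Scope R_scope.

(* Alphabet A = {0,...,k-1} (letters are nats < k).
   Extended alphabet A* = A ∪ {G}: encoded as [option nat], with [None] = gap G. *)
Definition Astar (k : nat) : list (option nat) := None :: map Some (seq 0 k).

(* ||S||_delta = max_{c,d,e in A*} |S(c,d) - S(c,e)|  (all values are >= 0) *)
Definition Sdelta (k : nat) (sc : option nat -> option nat -> R) : R :=
  fold_right Rmax 0
    (flat_map (fun c => flat_map (fun d => map (fun e => Rabs (sc c d - sc c e))
        (Astar k)) (Astar k)) (Astar k)).

Fixpoint sublists {T : Type} (l : list T) : list (list T) :=
  match l with
  | [] => [[]]
  | a :: t => let r := sublists t in map (cons a) r ++ r
  end.

Fixpoint incr (pi : list (nat * nat)) : bool :=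
  match pi with
  | (a, b) :: ((c, d) :: _) as t => (Nat.ltb a c && Nat.ltb b d && incr t)%bool
  | _ => true
  end.

(* all alignments ((mu_1,nu_1),...,(mu_k,nu_k)), 1<=mu_1<...<mu_k<=m,
   1<=nu_1<...<nu_k<=m' (each is a subsequence of the lexicographically
   ordered list of all pairs). *)
Definition alignments (m m' : nat) : list (list (nat * nat)) :=
  filter incr (sublists (list_prod (seq 1 m) (seq 1 m'))).

(* 1-based letter access x_j *)
Definition letter_at (x : list nat) (j : nat) : option nat := Some (nth (j - 1) x 0%nat).

Definition sumR (l : list R) : R := fold_right Rplus 0 l.

Definition align_score (sc : option nat -> option nat -> R) (x y : list nat)
    (pi : list (nat * nat)) : R :=
  sumR (map (fun q => sc (letter_at x (fst q)) (letter_at y (snd q))) pi)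
  + sumR (map (fun j => sc (letter_at x j) None)
       (filter (fun j => negb (existsb (fun q => Nat.eqb (fst q) j) pi)) (seq 1 (length x))))
  + sumR (map (fun j => sc None (letter_at y j))
       (filter (fun j => negb (existsb (fun q => Nat.eqb (snd q) j) pi)) (seq 1 (length y)))).

Definition LS (sc : option nat -> option nat -> R) (x y : list nat) : R :=
  fold_right Rmax (align_score sc x y [])
    (map (align_score sc x y) (alignments (length x) (length y))).

Fixpoint words (k n : nat) : list (list nat) :=
  match n with
  | O => [[]]
  | Datatypes.S n' => flat_map (fun a => map (cons a) (words k n')) (seq 0 k)
  end.

Definition weight (p : nat -> R) (w : list nat) : R := fold_right Rmult 1 (map p w).

(* E[f(X,Y)], X = X_1..X_n, Y = Y_1..Y_n, all 2n letters i.i.d. with law p on {0..k-1} *)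
Definition Expect (k : nat) (p : nat -> R) (n : nat) (f : list nat -> list nat -> R) : R :=
  sumR (flat_map (fun X => map (fun Y => weight p X * weight p Y * f X Y) (words k n))
    (words k n)).

Definition Prob (k : nat) (p : nat -> R) (n : nat) (E : list nat -> list nat -> bool) : R :=
  Expect k p n (fun X Y => if E X Y then 1 else 0).

Definition lambda_n (k : nat) (p : nat -> R) (sc : option nat -> option nat -> R) (n : nat) : R :=
  Expect k p n (LS sc) / INR n.

Definition Rge_b (a b : R) : bool := if Rle_dec b a then true else false.

(* Proof structure.
   1. Random words: expectations [Ew] over i.i.d. letters (linearity, Fubini,
      independence of blocks) and, for functions with bounded differences,
      the exponential moment bound E exp(s(Eg - g)) <= exp(0.9 N s^2 D^2),
      whence a McDiarmid-type lower-tail inequality.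
   2. Alignments: the lists enumerated by [alignments] are exactly the strictly
      increasing index lists; they concatenate (scores add) and can be cut at
      any point of a given antidiagonal level.
   3. L_S is superadditive, symmetric, changes by at most ||S||_delta when one
      letter changes, and by at most 2B when a letter is appended.
   4. Doubling: with M(s) the largest mean score E L_S over length pairs
      summing to s, cutting optimal alignments at level m and a union bound
      over cut points give M(2m) <= 2M(m) + 3B + t + poly(m) exp(-c t^2/m);
      with t ~ sqrt m ln m this makes M(m)/m + ln m/(40 sqrt m) non-increasing
      along doublings, so lambda <= E L_n / n + ln n / (20 sqrt n).
   5. The theorem follows from the lower-tail inequality with t = 0.95 sqrt n ln n. *)

From Stdlib Require Import Reals List Lra Lia Sorted Bool ZArith.
Import ListNotations.
Open Scope R_scope.

Lemma sumR_cons a l : sumR (a :: l) = a + sumR l.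
Proof. reflexivity. Qed.

Lemma sumR_app l1 l2 : sumR (l1 ++ l2) = sumR l1 + sumR l2.
Proof.
  induction l1 as [|a l1 IH]; cbn [app]; [change (sumR []) with 0; lra|].
  rewrite !sumR_cons, IH. lra.
Qed.

Lemma sumR_map_plus {A} (f g : A -> R) l :
  sumR (map (fun x => f x + g x) l) = sumR (map f l) + sumR (map g l).
Proof. induction l as [|a l IH]; cbn [map]; [unfold sumR; simpl; lra|]. rewrite !sumR_cons, IH. lra. Qed.

Lemma sumR_map_scal {A} (c : R) (f : A -> R) l :
  sumR (map (fun x => c * f x) l) = c * sumR (map f l).
Proof. induction l as [|a l IH]; cbn [map]; [unfold sumR; simpl; lra|]. rewrite !sumR_cons, IH. lra. Qed.

Lemma sumR_map_ext {A} (f g : A -> R) l :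
  (forall x, In x l -> f x = g x) -> sumR (map f l) = sumR (map g l).
Proof. intros H. f_equal. apply map_ext_in. exact H. Qed.

Lemma sumR_map_le {A} (f g : A -> R) l :
  (forall x, In x l -> f x <= g x) -> sumR (map f l) <= sumR (map g l).
Proof.
  induction l as [|a l IH]; intros H; cbn [map]; [lra|]. rewrite !sumR_cons.
  apply Rplus_le_compat; [apply H; simpl; auto | apply IH; intros; apply H; simpl; auto].
Qed.

Lemma sumR_const {A} (c : R) (l : list A) : sumR (map (fun _ => c) l) = INR (length l) * c.
Proof.
  induction l as [|a l IH]; simpl map; [unfold sumR; simpl; lra|].
  rewrite sumR_cons, IH, length_cons, S_INR. lra.
Qed.

Lemma sumR_map_nonneg {A} (f : A -> R) l :
  (forall x, In x l -> 0 <= f x) -> 0 <= sumR (map f l).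
Proof.
  intros H. rewrite <- (Rmult_0_r (INR (length l))), <- sumR_const.
  apply sumR_map_le. exact H.
Qed.

Lemma sumR_ge_term {A} (h : A -> R) l j :
  In j l -> (forall i, In i l -> 0 <= h i) -> h j <= sumR (map h l).
Proof.
  induction l as [|a l IH]; intros Hj H; [destruct Hj|]. simpl map. rewrite sumR_cons.
  destruct Hj as [<-|Hj].
  - assert (0 <= sumR (map h l)) by (apply sumR_map_nonneg; intros; apply H; simpl; auto). lra.
  - assert (0 <= h a) by (apply H; simpl; auto).
    assert (h j <= sumR (map h l)) by (apply IH; auto; intros; apply H; simpl; auto). lra.
Qed.

Lemma sumR_flat_map {A B} (f : B -> R) (h : A -> list B) l :
  sumR (map f (flat_map h l)) = sumR (map (fun a => sumR (map f (h a))) l).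
Proof. induction l as [|a l IH]; cbn [map flat_map]; auto. rewrite map_app, sumR_app, IH. reflexivity. Qed.

Lemma sumR_map_sum {A B} (h : A -> B -> R) (l1 : list A) (l2 : list B) :
  sumR (map (fun a => sumR (map (fun b => h a b) l2)) l1) =
  sumR (map (fun b => sumR (map (fun a => h a b) l1)) l2).
Proof.
  induction l1 as [|a l1 IH]; simpl map.
  - rewrite sumR_const, Rmult_0_r. reflexivity.
  - rewrite sumR_cons, IH, <- sumR_map_plus. reflexivity.
Qed.

Lemma Rabs_le_inv a b : Rabs a <= b -> - b <= a <= b.
Proof. unfold Rabs; destruct (Rcase_abs a); intros; lra. Qed.

Lemma exp_le_exp x y : x <= y -> exp x <= exp y.
Proof. intros [H|<-]; [left; apply exp_increasing; auto | lra]. Qed.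

Lemma ln_le_mono x y : 0 < x -> x <= y -> ln x <= ln y.
Proof. intros H1 [H2|<-]; [left; apply ln_increasing; auto | lra]. Qed.

Definition is_word (k : nat) (w : list nat) : Prop := Forall (fun c => (c < k)%nat) w.

Lemma is_word_app k x y : is_word k x -> is_word k y -> is_word k (x ++ y).
Proof. intros. apply Forall_app; auto. Qed.

Lemma is_word_firstn k n x : is_word k x -> is_word k (firstn n x).
Proof.
  unfold is_word. intros H. rewrite <- (firstn_skipn n x) in H. apply Forall_app in H. tauto.
Qed.

Lemma is_word_skipn k n x : is_word k x -> is_word k (skipn n x).
Proof.
  unfold is_word. intros H. rewrite <- (firstn_skipn n x) in H. apply Forall_app in H. tauto.
Qed.

Lemma words_in k N w : In w (words k N) -> length w = N /\ is_word k w.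
Proof.
  revert w; induction N as [|N IH]; intros w H; simpl in H.
  - destruct H as [<-|[]]. split; [reflexivity | constructor].
  - apply in_flat_map in H. destruct H as [c [Hc Hw]]. apply in_map_iff in Hw.
    destruct Hw as [w' [<- Hw']]. apply IH in Hw'. destruct Hw'. apply in_seq in Hc.
    split; simpl; [lia | constructor; [lia | auto]].
Qed.

Definition Ew (k : nat) (p : nat -> R) (N : nat) (g : list nat -> R) : R :=
  sumR (map (fun w => weight p w * g w) (words k N)).

Section RandomWords.

Variable k : nat.
Variable p : nat -> R.
Hypothesis p_nonneg : forall i, (i < k)%nat -> 0 <= p i.
Hypothesis p_sum : sumR (map p (seq 0 k)) = 1.

Lemma Ew_0 g : Ew k p 0 g = g [].
Proof. unfold Ew, weight, sumR. simpl. lra. Qed.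

Lemma Ew_S N g :
  Ew k p (S N) g = sumR (map (fun c => p c * Ew k p N (fun w => g (c :: w))) (seq 0 k)).
Proof.
  unfold Ew. simpl. rewrite sumR_flat_map. apply sumR_map_ext. intros c _.
  rewrite map_map, <- sumR_map_scal. apply sumR_map_ext. intros w _.
  unfold weight; simpl. lra.
Qed.

Lemma Ew_ext N g h :
  (forall w, length w = N -> is_word k w -> g w = h w) -> Ew k p N g = Ew k p N h.
Proof.
  intros H. apply sumR_map_ext. intros w Hw. apply words_in in Hw.
  destruct Hw. rewrite H; auto.
Qed.

Lemma Ew_plus N g h : Ew k p N (fun w => g w + h w) = Ew k p N g + Ew k p N h.
Proof. unfold Ew. rewrite <- sumR_map_plus. apply sumR_map_ext. intros; lra. Qed.

Lemma Ew_scal N c g : Ew k p N (fun w => c * g w) = c * Ew k p N g.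
Proof. unfold Ew. rewrite <- sumR_map_scal. apply sumR_map_ext. intros; lra. Qed.

Lemma Ew_opp N g : Ew k p N (fun w => - g w) = - Ew k p N g.
Proof.
  replace (- Ew k p N g) with ((-1) * Ew k p N g) by lra. rewrite <- Ew_scal.
  apply Ew_ext; intros; lra.
Qed.

Lemma Ew_sum N {A} (h : A -> list nat -> R) l :
  Ew k p N (fun w => sumR (map (fun a => h a w) l)) = sumR (map (fun a => Ew k p N (h a)) l).
Proof.
  unfold Ew. rewrite (sumR_map_ext _ (fun w => sumR (map (fun a => weight p w * h a w) l))).
  - apply sumR_map_sum.
  - intros. rewrite <- sumR_map_scal. reflexivity.
Qed.

Lemma Ew_le N g h :
  (forall w, length w = N -> is_word k w -> g w <= h w) -> Ew k p N g <= Ew k p N h.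
Proof.
  revert g h. induction N as [|N IH]; intros g h H.
  - rewrite !Ew_0. apply H; [reflexivity | constructor].
  - rewrite !Ew_S. apply sumR_map_le. intros c Hc. apply in_seq in Hc.
    apply Rmult_le_compat_l; [apply p_nonneg; lia|]. apply IH. intros w Hl Hw.
    apply H; simpl; [lia | constructor; [lia | auto]].
Qed.

Lemma Ew_const N c : Ew k p N (fun _ => c) = c.
Proof.
  induction N as [|N IH].
  - apply Ew_0.
  - rewrite Ew_S, (sumR_map_ext _ (fun c0 => c * p c0)).
    + rewrite sumR_map_scal, p_sum; lra.
    + intros; rewrite IH; lra.
Qed.

Lemma Ew_add_const N g c : Ew k p N (fun w => g w + c) = Ew k p N g + c.
Proof. rewrite Ew_plus, Ew_const. reflexivity. Qed.

Lemma Ew_affine_sum N {A} c0 c1 (h : A -> list nat -> R) l :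
  Ew k p N (fun w => c0 + c1 * sumR (map (fun j => h j w) l)) =
  c0 + c1 * sumR (map (fun j => Ew k p N (h j)) l).
Proof. rewrite Ew_plus, Ew_const, Ew_scal, Ew_sum. reflexivity. Qed.

Lemma Ew_prod a b (g : list nat -> list nat -> R) :
  Ew k p (a + b) (fun w => g (firstn a w) (skipn a w)) =
  Ew k p a (fun x => Ew k p b (fun y => g x y)).
Proof.
  revert g; induction a as [|a IH]; intros g.
  - rewrite Ew_0. reflexivity.
  - simpl plus. rewrite !Ew_S. apply sumR_map_ext. intros c _. f_equal.
    apply (IH (fun x y => g (c :: x) y)).
Qed.

Lemma Ew_split a b H :
  Ew k p (a + b) H = Ew k p a (fun x1 => Ew k p b (fun x2 => H (x1 ++ x2))).
Proof.
  rewrite <- (Ew_prod a b (fun x y => H (x ++ y))). apply Ew_ext. intros. rewrite firstn_skipn; auto.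
Qed.

Lemma Ew_fubini a b (F : list nat -> list nat -> R) :
  Ew k p a (fun x => Ew k p b (fun y => F x y)) = Ew k p b (fun y => Ew k p a (fun x => F x y)).
Proof.
  revert F; induction a as [|a IH]; intros F.
  - rewrite Ew_0. apply Ew_ext. intros. rewrite Ew_0. reflexivity.
  - rewrite Ew_S, (sumR_map_ext _ (fun c => p c * Ew k p b (fun y => Ew k p a (fun x => F (c :: x) y)))).
    2:{ intros c _. rewrite (IH (fun x y => F (c :: x) y)). reflexivity. }
    rewrite (Ew_ext b (fun y => Ew k p (S a) (fun x => F x y))
        (fun y => sumR (map (fun c => p c * Ew k p a (fun x => F (c :: x) y)) (seq 0 k)))).
    2:{ intros. apply Ew_S. }
    rewrite Ew_sum. apply sumR_map_ext. intros. symmetry. apply Ew_scal.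
Qed.

Lemma Ew_firstn n N h : (n <= N)%nat ->
  Ew k p N (fun w => h (firstn n w)) = Ew k p n h.
Proof.
  intros Hn. replace N with (n + (N - n))%nat by lia.
  rewrite (Ew_prod n (N - n) (fun x y => h x)). apply Ew_ext. intros. apply Ew_const.
Qed.

Lemma Ew_skipn n N h : (n <= N)%nat ->
  Ew k p N (fun w => h (skipn n w)) = Ew k p (N - n) h.
Proof.
  intros Hn. replace N with (n + (N - n))%nat at 1 by lia.
  rewrite (Ew_prod n (N - n) (fun x y => h y)). apply Ew_const.
Qed.

Lemma Ew_blocks a b h1 h2 :
  Ew k p (a + b) (fun w => h1 (firstn a w) + h2 (skipn a w)) = Ew k p a h1 + Ew k p b h2.
Proof.
  rewrite Ew_plus, Ew_firstn, Ew_skipn by lia. do 2 f_equal. lia.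
Qed.

Lemma Expect_Ew n F : Expect k p n F = Ew k p n (fun X => Ew k p n (fun Y => F X Y)).
Proof.
  unfold Expect, Ew. rewrite <- (map_id (flat_map _ _)), sumR_flat_map.
  apply sumR_map_ext. intros X _. rewrite map_map, <- sumR_map_scal.
  apply sumR_map_ext. intros; lra.
Qed.

Definition bounded_diff (g : list nat -> R) (D : R) : Prop :=
  forall u v c c', is_word k u -> is_word k v -> (c < k)%nat -> (c' < k)%nat ->
    Rabs (g (u ++ c :: v) - g (u ++ c' :: v)) <= D.

Lemma bounded_diff_cons g D c :
  bounded_diff g D -> (c < k)%nat -> bounded_diff (fun w => g (c :: w)) D.
Proof.
  intros H Hc u v a a' Hu Hv Ha Ha'. apply (H (c :: u) v a a'); auto. constructor; auto.
Qed.

Lemma bounded_diff_opp g D : bounded_diff g D -> bounded_diff (fun w => - g w) D.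
Proof.
  intros H u v a a' Hu Hv Ha Ha'. rewrite <- Rabs_Ropp.
  replace (- (- g (u ++ a :: v) - - g (u ++ a' :: v))) with
    (g (u ++ a :: v) - g (u ++ a' :: v)) by ring. auto.
Qed.

Lemma bounded_diff_blocks (H : list nat -> list nat -> R) D a :
  (forall x2, is_word k x2 -> bounded_diff (fun x1 => H x1 x2) D) ->
  (forall x1, is_word k x1 -> bounded_diff (fun x2 => H x1 x2) D) ->
  bounded_diff (fun w => H (firstn a w) (skipn a w)) D.
Proof.
  intros H1 H2 u v c c' Hu Hv Hc Hc'. rewrite !firstn_app, !skipn_app.
  destruct (le_lt_dec a (length u)) as [Hle|Hlt].
  - replace (a - length u)%nat with 0%nat by lia. simpl. rewrite !app_nil_r.
    apply (H2 (firstn a u)); auto using is_word_firstn, is_word_skipn.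
  - rewrite !firstn_all2, !skipn_all2 by lia. simpl.
    replace (a - length u)%nat with (S (a - length u - 1)) by lia. simpl.
    apply (H1 (skipn (a - length u - 1) v)); auto using is_word_firstn, is_word_skipn.
Qed.

Lemma avg_ge x (h : nat -> R) :
  (forall c, (c < k)%nat -> x <= h c) -> x <= sumR (map (fun c => p c * h c) (seq 0 k)).
Proof.
  intros H. replace x with (sumR (map (fun c => x * p c) (seq 0 k))).
  - apply sumR_map_le. intros c Hc. apply in_seq in Hc. rewrite Rmult_comm.
    apply Rmult_le_compat_l; [apply p_nonneg; lia | apply H; lia].
  - rewrite sumR_map_scal, p_sum. ring.
Qed.

Lemma avg_le x (h : nat -> R) :
  (forall c, (c < k)%nat -> h c <= x) -> sumR (map (fun c => p c * h c) (seq 0 k)) <= x.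
Proof.
  intros H. assert (- x <= sumR (map (fun c => p c * (- h c)) (seq 0 k))) as Hx.
  { apply avg_ge. intros c Hc. specialize (H c Hc). lra. }
  rewrite (sumR_map_ext _ (fun c => (-1) * (p c * h c))), sumR_map_scal in Hx
    by (intros; ring). lra.
Qed.

Lemma Ew_first_letter N g D c :
  bounded_diff g D -> (c < k)%nat ->
  Rabs (Ew k p (S N) g - Ew k p N (fun w => g (c :: w))) <= D.
Proof.
  intros HB Hc.
  assert (Hcmp : forall c', (c' < k)%nat ->
    Ew k p N (fun w => g (c :: w)) <= Ew k p N (fun w => g (c' :: w)) + D /\
    Ew k p N (fun w => g (c' :: w)) <= Ew k p N (fun w => g (c :: w)) + D).
  { intros c' Hc'. rewrite <- !Ew_add_const. split; apply Ew_le; intros w _ Hw.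
    - specialize (HB [] w c c' (Forall_nil _) Hw Hc Hc'). apply Rabs_le_inv in HB. simpl in HB. lra.
    - specialize (HB [] w c' c (Forall_nil _) Hw Hc' Hc). apply Rabs_le_inv in HB. simpl in HB. lra. }
  rewrite Ew_S. apply Rabs_le. split.
  - enough (Ew k p N (fun w => g (c :: w)) - D <=
            sumR (map (fun c0 => p c0 * Ew k p N (fun w => g (c0 :: w))) (seq 0 k))) by lra.
    apply avg_ge. intros c' Hc'. destruct (Hcmp c' Hc'). lra.
  - enough (sumR (map (fun c0 => p c0 * Ew k p N (fun w => g (c0 :: w))) (seq 0 k)) <=
            Ew k p N (fun w => g (c :: w)) + D) by lra.
    apply avg_le. intros c' Hc'. destruct (Hcmp c' Hc'). lra.
Qed.

Lemma Ew_oscillation N g D :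
  bounded_diff g D -> forall w, length w = N -> is_word k w -> g w <= Ew k p N g + INR N * D.
Proof.
  revert g. induction N as [|N IH]; intros g HB w Hl Hw.
  - destruct w; [|discriminate]. rewrite Ew_0. simpl. lra.
  - destruct w as [|c w]; [discriminate|]. inversion Hw as [|? ? Hc Hw']; subst.
    injection Hl as Hl.
    pose proof (IH (fun w => g (c :: w)) (bounded_diff_cons _ _ _ HB Hc) w Hl Hw').
    pose proof (Ew_first_letter N g D c HB Hc) as Hm. apply Rabs_le_inv in Hm.
    rewrite S_INR. simpl in *. lra.
Qed.

Lemma exp_quad x : Rabs x <= 0.2 -> exp x <= 1 + x + 0.9 * (x * x).
Proof.
  intros Hx. apply Rabs_le_inv in Hx.
  assert (Hhalf : exp (x / 2) <= / (1 - x / 2)).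
  { pose proof (exp_ineq1_le (- (x / 2))) as H1.
    assert (exp (x/2) * exp (- (x/2)) = 1) by (rewrite <- exp_plus, Rplus_opp_r; apply exp_0).
    pose proof (exp_pos (x / 2)).
    apply (Rmult_le_reg_r (1 - x/2)); [lra|]. rewrite Rinv_l by lra. nra. }
  replace (exp x) with (exp (x/2) * exp (x/2)) by (rewrite <- exp_plus; f_equal; field).
  pose proof (exp_pos (x / 2)).
  apply Rle_trans with (/ (1 - x/2) * / (1 - x/2)); [apply Rmult_le_compat; lra|].
  rewrite <- Rinv_mult.
  apply (Rmult_le_reg_r ((1 - x/2) * (1 - x/2))); [nra|]. rewrite Rinv_l by nra. nra.
Qed.

Lemma exp_moment_step N g D s m E0 :
  bounded_diff g D -> 0 <= s -> s * D <= 0.2 -> m = Ew k p (S N) g -> 0 <= E0 ->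
  sumR (map (fun c => p c * (E0 * exp (s * (m - Ew k p N (fun w => g (c :: w)))))) (seq 0 k))
    <= E0 * exp (0.9 * (s * s * (D * D))).
Proof.
  intros HB Hs HsD Hm HE0.
  apply Rle_trans with (sumR (map (fun c => p c * (E0 *
     (1 + s * (m - Ew k p N (fun w => g (c :: w))) + 0.9 * (s * s * (D * D))))) (seq 0 k))).
  { apply sumR_map_le. intros c Hc. apply in_seq in Hc.
    apply Rmult_le_compat_l; [apply p_nonneg; lia|]. apply Rmult_le_compat_l; [lra|].
    pose proof (Ew_first_letter N g D c HB ltac:(lia)) as Hd. rewrite <- Hm in Hd.
    set (d := m - Ew k p N (fun w => g (c :: w))) in *.
    assert (Hsd : Rabs (s * d) <= 0.2).
    { rewrite Rabs_mult, Rabs_pos_eq by lra. eapply Rle_trans; [|exact HsD].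
      apply Rmult_le_compat_l; lra. }
    eapply Rle_trans; [apply exp_quad, Hsd|].
    apply Rabs_le_inv in Hd. assert (d * d <= D * D) by nra. nra. }
  rewrite (sumR_map_ext _ (fun c => (E0 * (1 + s * m + 0.9 * (s * s * (D * D)))) * p c +
      (- (E0 * s)) * (p c * Ew k p N (fun w => g (c :: w))))) by (intros; ring).
  rewrite sumR_map_plus, !sumR_map_scal, p_sum, <- Ew_S, <- Hm.
  pose proof (exp_ineq1_le (0.9 * (s * s * (D * D)))). nra.
Qed.

Lemma Ew_exp_moment N g D s :
  bounded_diff g D -> 0 <= s -> s * D <= 0.2 ->
  Ew k p N (fun w => exp (s * (Ew k p N g - g w))) <= exp (0.9 * INR N * (s * s * (D * D))).
Proof.
  intros HB Hs HsD. revert g HB. induction N as [|N IH]; intros g HB.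
  - rewrite !Ew_0, Rminus_diag, Rmult_0_r. simpl INR. rewrite Rmult_0_r, Rmult_0_l. lra.
  - set (m := Ew k p (S N) g). set (E0 := exp (0.9 * INR N * (s * s * (D * D)))).
    rewrite Ew_S.
    apply Rle_trans with (sumR (map (fun c => p c *
        (E0 * exp (s * (m - Ew k p N (fun w => g (c :: w)))))) (seq 0 k))).
    { apply sumR_map_le. intros c Hc. apply in_seq in Hc.
      apply Rmult_le_compat_l; [apply p_nonneg; lia|].
      rewrite (Ew_ext N _ (fun w => exp (s * (m - Ew k p N (fun w => g (c :: w)))) *
                 exp (s * (Ew k p N (fun w => g (c :: w)) - g (c :: w))))).
      2:{ intros. rewrite <- exp_plus. f_equal. ring. }
      rewrite Ew_scal, Rmult_comm. apply Rmult_le_compat_r; [left; apply exp_pos|].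
      apply (IH (fun w => g (c :: w))). apply bounded_diff_cons; [exact HB | lia]. }
    eapply Rle_trans; [apply (exp_moment_step N g D s m E0); auto; left; apply exp_pos|].
    unfold E0. rewrite <- exp_plus, S_INR. right. f_equal. ring.
Qed.

(* Optimizing the exponential moment bound over s (Chernoff): the choice
   s = t / (1.8 N D^2) turns it into a Gaussian-type tail. *)
Lemma chernoff_exponent N D t : 0 < N -> 0 < D -> 0 <= t -> t <= 0.36 * N * D ->
  exists s, 0 <= s /\ s * D <= 0.2 /\
    exp (- (s * t)) * exp (0.9 * N * (s * s * (D * D))) = exp (- (t * t / (3.6 * N * (D * D)))).
Proof.
  intros HN HD Ht HtN.
  assert (HND : 0 < N * (D * D)) by (apply Rmult_lt_0_compat; [|apply Rmult_lt_0_compat]; lra).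
  exists (t / (1.8 * N * (D * D))). split; [|split].
  - apply Rmult_le_pos; [lra | left; apply Rinv_0_lt_compat; nra].
  - replace (t / (1.8 * N * (D * D)) * D) with (t / (1.8 * N * D)) by (field; lra).
    apply Rmult_le_reg_r with (1.8 * N * D); [nra|].
    unfold Rdiv. rewrite Rmult_assoc, Rinv_l by nra. nra.
  - rewrite <- exp_plus. f_equal. replace 1.8 with (18 / 10) by lra.
    replace 3.6 with (36 / 10) by lra. replace 0.9 with (9 / 10) by lra. field. lra.
Qed.

Lemma Ew_lower_tail N g D t (ind : list nat -> R) :
  bounded_diff g D -> (1 <= N)%nat -> 0 < D -> 0 <= t -> t <= 0.36 * INR N * D ->
  (forall w, length w = N -> is_word k w -> 0 <= ind w) ->
  (forall w, length w = N -> is_word k w -> Ew k p N g - t <= g w -> 1 <= ind w) ->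
  1 - exp (- (t * t / (3.6 * INR N * (D * D)))) <= Ew k p N ind.
Proof.
  intros HB HN HD Ht HtN Hind0 Hind1.
  assert (HNR : 0 < INR N) by (apply lt_0_INR; lia).
  destruct (chernoff_exponent (INR N) D t HNR HD Ht HtN) as [s [Hs [HsD Hexp]]].
  assert (Hpt : forall w, length w = N -> is_word k w ->
            1 - exp (- (s * t)) * exp (s * (Ew k p N g - g w)) <= ind w).
  { intros w Hl Hw. rewrite <- exp_plus. destruct (Rle_dec (Ew k p N g - t) (g w)) as [Hle|Hlt].
    - pose proof (exp_pos (- (s * t) + s * (Ew k p N g - g w))). specialize (Hind1 w Hl Hw Hle). lra.
    - assert (1 <= exp (- (s * t) + s * (Ew k p N g - g w))).
      { rewrite <- exp_0. apply exp_le_exp. nra. }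
      specialize (Hind0 w Hl Hw). lra. }
  eapply Rle_trans; [|apply Ew_le, Hpt].
  rewrite (Ew_ext N _ (fun w => 1 + (- exp (- (s * t))) * exp (s * (Ew k p N g - g w)))) by (intros; ring).
  rewrite Ew_plus, Ew_const, Ew_scal, <- Hexp.
  pose proof (Ew_exp_moment N g D s HB Hs HsD). pose proof (exp_pos (- (s * t))). nra.
Qed.

Lemma bounded_diff_plus_const g h c D :
  (forall w, h w = g w + c) -> bounded_diff g D -> bounded_diff h D.
Proof.
  intros Hh H u v a a' Hu Hv Ha Ha'. rewrite !Hh.
  replace (g (u ++ a :: v) + c - (g (u ++ a' :: v) + c)) with
    (g (u ++ a :: v) - g (u ++ a' :: v)) by ring. auto.
Qed.

End RandomWords.

Section Alignments.
Local Open Scope nat_scope.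

Definition ltlt (q r : nat * nat) : Prop := (fst q < fst r /\ snd q < snd r)%nat.

Definition lexlt (q r : nat * nat) : Prop :=
  (fst q < fst r \/ (fst q = fst r /\ snd q < snd r))%nat.

Definition inrange (m m' : nat) (q : nat * nat) : Prop :=
  (1 <= fst q <= m /\ 1 <= snd q <= m')%nat.

Definition valid (m m' : nat) (pi : list (nat * nat)) : Prop :=
  StronglySorted ltlt pi /\ Forall (inrange m m') pi.

Lemma valid_nil m m' : valid m m' [].
Proof. split; constructor. Qed.

Lemma SS_forall {A} (R : A -> A -> Prop) a l :
  StronglySorted R (a :: l) -> forall y, In y l -> R a y.
Proof. intros H. apply StronglySorted_inv in H. rewrite <- Forall_forall. tauto. Qed.

Lemma SS_app {A} (R : A -> A -> Prop) l1 l2 :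
  StronglySorted R l1 -> StronglySorted R l2 ->
  (forall x y, In x l1 -> In y l2 -> R x y) -> StronglySorted R (l1 ++ l2).
Proof.
  induction l1 as [|a l1 IH]; intros H1 H2 H; simpl; auto.
  apply StronglySorted_inv in H1. destruct H1. constructor.
  - apply IH; auto. intros; apply H; simpl; auto.
  - apply Forall_app; split; auto. apply Forall_forall. intros; apply H; simpl; auto.
Qed.

Lemma SS_app_inv {A} (R : A -> A -> Prop) l1 l2 :
  StronglySorted R (l1 ++ l2) ->
  StronglySorted R l1 /\ StronglySorted R l2 /\ (forall x y, In x l1 -> In y l2 -> R x y).
Proof.
  induction l1 as [|a l1 IH]; intros H; simpl in *.
  - repeat split; auto. constructor. intros ? ? [].
  - apply StronglySorted_inv in H. destruct H as [H Hf]. destruct (IH H) as [? [? ?]].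
    rewrite Forall_app in Hf. destruct Hf as [Hf1 Hf2].
    repeat split; auto.
    + constructor; auto.
    + intros x y [<-|Hx] Hy; auto. rewrite Forall_forall in Hf2; auto.
Qed.

Lemma SS_map_in {A B} (R : A -> A -> Prop) (R' : B -> B -> Prop) (f : A -> B) l :
  (forall x y, In x l -> In y l -> R x y -> R' (f x) (f y)) ->
  StronglySorted R l -> StronglySorted R' (map f l).
Proof.
  induction l as [|a l IH]; intros Hf H; simpl; constructor.
  - apply StronglySorted_inv in H. apply IH; [|tauto]. intros; apply Hf; simpl; auto.
  - apply StronglySorted_inv in H. destruct H as [_ H]. rewrite Forall_forall in *.
    intros y Hy. apply in_map_iff in Hy. destruct Hy as [z [<- Hz]]. apply Hf; simpl; auto.
Qed.

Lemma SS_impl {A} (R R' : A -> A -> Prop) l :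
  (forall x y, R x y -> R' x y) -> StronglySorted R l -> StronglySorted R' l.
Proof. intros H Hs. rewrite <- (map_id l). apply (SS_map_in R); auto. Qed.

Lemma incr_SS pi : incr pi = true <-> StronglySorted ltlt pi.
Proof.
  assert (Hsorted : incr pi = true <-> Sorted ltlt pi).
  { induction pi as [|[a b] t IH]; simpl; [split; auto|].
    destruct t as [|[c d] t']; [split; auto|].
    rewrite !andb_true_iff, !Nat.ltb_lt, IH. split.
    - intros [[H1 H2] H3]. constructor; auto. constructor. split; simpl; auto.
    - intros H. inversion H as [|? ? H2 H3]; subst. inversion H3; subst. tauto. }
  rewrite Hsorted. split; [|apply StronglySorted_Sorted].
  apply Sorted_StronglySorted. intros x y z [? ?] [? ?]; split; lia.
Qed.

Lemma sublists_incl {T} (L pi : list T) : In pi (sublists L) -> incl pi L.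
Proof.
  revert pi; induction L as [|a L IH]; simpl; intros pi H.
  - destruct H as [<-|[]]. apply incl_nil_l.
  - apply in_app_or in H. destruct H as [H|H].
    + apply in_map_iff in H. destruct H as [pi' [<- H]].
      apply incl_cons; simpl; auto. apply incl_tl; auto.
    + apply incl_tl; auto.
Qed.

Lemma sublist_in (L pi : list (nat * nat)) :
  StronglySorted lexlt L -> StronglySorted lexlt pi -> incl pi L -> In pi (sublists L).
Proof.
  assert (Hirr : forall x, ~ lexlt x x) by (unfold lexlt; lia).
  assert (Htr : forall x y z, lexlt x y -> lexlt y z -> lexlt x z) by (unfold lexlt; lia).
  revert pi; induction L as [|a L IH]; intros pi HL Hp Hi; simpl.
  - destruct pi as [|q pi']; auto. exfalso. apply (Hi q); simpl; auto.
  - apply in_or_app. pose proof (SS_forall _ _ _ HL) as Ha. apply StronglySorted_inv in HL.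
    destruct HL as [HL _]. destruct pi as [|q pi'].
    + right. apply IH; auto. apply incl_nil_l.
    + pose proof (SS_forall _ _ _ Hp) as Hq. apply StronglySorted_inv in Hp. destruct Hp as [Hp _].
      assert (Hqin : In q (a :: L)) by (apply Hi; simpl; auto).
      destruct Hqin as [Heq|HqL].
      * subst q. left. apply in_map. apply IH; auto. intros y Hy.
        assert (Hy' : In y (a :: L)) by (apply Hi; simpl; auto). destruct Hy' as [Heq|]; auto.
        exfalso. subst y. apply (Hirr a). apply Hq; auto.
      * right. apply IH; [assumption| |].
        { constructor; auto. apply Forall_forall; auto. }
        intros y [<-|Hy]; auto.
        assert (Hy' : In y (a :: L)) by (apply Hi; simpl; auto). destruct Hy' as [Heq|]; auto.
        exfalso. subst y. apply (Hirr a). apply Htr with q; auto.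
Qed.

Lemma seq_SS_lt s n : StronglySorted lt (seq s n).
Proof.
  revert s; induction n as [|n IH]; intros s; simpl; constructor; auto.
  apply Forall_forall. intros y Hy. apply in_seq in Hy. lia.
Qed.

Lemma prod_SS xs n m :
  StronglySorted lt xs -> StronglySorted lexlt (list_prod xs (seq n m)).
Proof.
  induction xs as [|x xs IH]; intros H; simpl; [constructor|].
  pose proof (SS_forall _ _ _ H) as Hx. apply StronglySorted_inv in H. destruct H as [H _].
  apply SS_app; auto.
  - apply (SS_map_in lt); [|apply seq_SS_lt]. intros; unfold lexlt; simpl; lia.
  - intros u v Hu Hv. apply in_map_iff in Hu. destruct Hu as [y [<- _]].
    destruct v as [v1 v2]. apply in_prod_iff in Hv. destruct Hv as [H0 _].
    specialize (Hx _ H0). unfold lexlt; simpl; lia.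
Qed.

Lemma align_iff m m' pi : In pi (alignments m m') <-> valid m m' pi.
Proof.
  unfold alignments, valid. rewrite filter_In, incr_SS. split.
  - intros [Hs Hi]. split; auto. apply sublists_incl in Hs. apply Forall_forall.
    intros q Hq. apply Hs in Hq. destruct q as [u v]. apply in_prod_iff in Hq.
    destruct Hq as [H1 H2]. apply in_seq in H1, H2. unfold inrange; simpl; lia.
  - intros [Hs Hr]. split; auto. apply sublist_in.
    + apply prod_SS, seq_SS_lt.
    + apply (SS_impl ltlt); auto. intros x y [? ?]; unfold lexlt; lia.
    + intros [u v] Hq. rewrite Forall_forall in Hr. apply Hr in Hq. unfold inrange in Hq; simpl in Hq.
      apply in_prod; apply in_seq; lia.
Qed.

Lemma valid_widen m m' n n' pi : (m <= n)%nat -> (m' <= n')%nat -> valid m m' pi -> valid n n' pi.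
Proof.
  intros H1 H2 [Hs Hr]. split; auto. eapply Forall_impl; [|exact Hr]. unfold inrange; intros; lia.
Qed.

End Alignments.

Definition shift (a b : nat) (pi : list (nat * nat)) : list (nat * nat) :=
  map (fun q => (fst q + a, snd q + b)%nat) pi.

Definition gaps (P : list nat) (n : nat) : list nat :=
  filter (fun j => negb (existsb (fun v => Nat.eqb v j) P)) (seq 1 n).

Lemma existsb_proj (pr : nat * nat -> nat) pi j :
  existsb (fun q => Nat.eqb (pr q) j) pi = existsb (fun v => Nat.eqb v j) (map pr pi).
Proof. induction pi as [|q pi IH]; simpl; auto. rewrite IH; auto. Qed.

Lemma existsb_false_all (P : list nat) j :
  Forall (fun v => v <> j) P -> existsb (fun v => Nat.eqb v j) P = false.
Proof.
  induction P as [|a P IH]; simpl; intros H; auto. inversion H; subst. rewrite IH; auto.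
  destruct (Nat.eqb_spec a j); [contradiction | auto].
Qed.

Lemma existsb_shift (P : list nat) n j :
  existsb (fun v => Nat.eqb v (j + n)) (map (fun v => (v + n)%nat) P) =
  existsb (fun v => Nat.eqb v j) P.
Proof.
  induction P as [|a P IH]; simpl; auto. rewrite IH. f_equal.
  destruct (Nat.eqb_spec (a + n) (j + n)), (Nat.eqb_spec a j); auto; lia.
Qed.

Lemma seq_shift_add s n m : seq (s + m) n = map (fun v => (v + m)%nat) (seq s n).
Proof. revert s; induction n as [|n IH]; intros s; simpl; auto. f_equal. rewrite <- IH. f_equal; lia. Qed.

Lemma gaps_split P1 P2 n1 n2 :
  Forall (fun v => 1 <= v <= n1)%nat P1 -> Forall (fun v => 1 <= v)%nat P2 ->
  gaps (P1 ++ map (fun v => (v + n1)%nat) P2) (n1 + n2) =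
  gaps P1 n1 ++ map (fun v => (v + n1)%nat) (gaps P2 n2).
Proof.
  intros H1 H2. unfold gaps. rewrite seq_app, filter_app. f_equal.
  - apply filter_ext_in. intros j Hj. apply in_seq in Hj. rewrite existsb_app.
    rewrite (existsb_false_all (map _ P2)); [rewrite orb_false_r; auto|].
    apply Forall_map. eapply Forall_impl; [|exact H2]. simpl; intros; lia.
  - rewrite seq_shift_add, filter_map_swap. f_equal. apply filter_ext_in.
    intros j Hj. apply in_seq in Hj. rewrite existsb_app, existsb_shift.
    rewrite (existsb_false_all P1); auto.
    eapply Forall_impl; [|exact H1]. simpl; intros; lia.
Qed.

Lemma letter_at_app_l x1 x2 j :
  (1 <= j <= length x1)%nat -> letter_at (x1 ++ x2) j = letter_at x1 j.
Proof. intros H. unfold letter_at. rewrite app_nth1; auto. lia. Qed.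

Lemma letter_at_app_r x1 x2 j :
  (1 <= j)%nat -> letter_at (x1 ++ x2) (j + length x1) = letter_at x2 j.
Proof. intros H. unfold letter_at. rewrite app_nth2 by lia. do 2 f_equal. lia. Qed.

Lemma gap_sum_split (f : option nat -> R) (x1 x2 : list nat) P1 P2 :
  Forall (fun v => 1 <= v <= length x1)%nat P1 -> Forall (fun v => 1 <= v)%nat P2 ->
  sumR (map (fun j => f (letter_at (x1 ++ x2) j))
         (gaps (P1 ++ map (fun v => (v + length x1)%nat) P2) (length (x1 ++ x2)))) =
  sumR (map (fun j => f (letter_at x1 j)) (gaps P1 (length x1))) +
  sumR (map (fun j => f (letter_at x2 j)) (gaps P2 (length x2))).
Proof.
  intros H1 H2. rewrite length_app, gaps_split, map_app, sumR_app, map_map by auto.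
  f_equal; apply sumR_map_ext; intros j Hj; apply filter_In in Hj; destruct Hj as [Hj _];
    apply in_seq in Hj; f_equal.
  - apply letter_at_app_l; lia.
  - apply letter_at_app_r; lia.
Qed.

Lemma match_sum_split sc x1 x2 y1 y2 pi1 pi2 :
  Forall (inrange (length x1) (length y1)) pi1 ->
  Forall (fun q => 1 <= fst q /\ 1 <= snd q)%nat pi2 ->
  sumR (map (fun q => sc (letter_at (x1 ++ x2) (fst q)) (letter_at (y1 ++ y2) (snd q)))
         (pi1 ++ shift (length x1) (length y1) pi2)) =
  sumR (map (fun q => sc (letter_at x1 (fst q)) (letter_at y1 (snd q))) pi1) +
  sumR (map (fun q => sc (letter_at x2 (fst q)) (letter_at y2 (snd q))) pi2).
Proof.
  intros H1 H2. rewrite Forall_forall in H1, H2.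
  unfold shift. rewrite map_app, sumR_app, map_map. simpl. f_equal; apply sumR_map_ext.
  - intros q Hq. destruct (H1 q Hq). rewrite !letter_at_app_l; auto.
  - intros q Hq. destruct (H2 q Hq). rewrite !letter_at_app_r; auto.
Qed.

Lemma score_split sc x1 x2 y1 y2 pi1 pi2 :
  Forall (inrange (length x1) (length y1)) pi1 ->
  Forall (fun q => 1 <= fst q /\ 1 <= snd q)%nat pi2 ->
  align_score sc (x1 ++ x2) (y1 ++ y2) (pi1 ++ shift (length x1) (length y1) pi2) =
  align_score sc x1 y1 pi1 + align_score sc x2 y2 pi2.
Proof.
  intros H1 H2. unfold align_score.
  assert (Hgaps : forall (pr : nat * nat -> nat) pi n,
            filter (fun j => negb (existsb (fun q => Nat.eqb (pr q) j) pi)) (seq 1 n) =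
            gaps (map pr pi) n).
  { intros. apply filter_ext. intros. rewrite existsb_proj. reflexivity. }
  rewrite !Hgaps, match_sum_split by auto. unfold shift. rewrite !map_app, !map_map. simpl.
  replace (map (fun q : nat * nat => (fst q + length x1)%nat) pi2)
    with (map (fun v => (v + length x1)%nat) (map fst pi2)) by apply map_map.
  replace (map (fun q : nat * nat => (snd q + length y1)%nat) pi2)
    with (map (fun v => (v + length y1)%nat) (map snd pi2)) by apply map_map.
  rewrite (gap_sum_split (fun c => sc c None)), (gap_sum_split (fun c => sc None c)).
  - lra.
  - apply Forall_map. eapply Forall_impl; [|exact H1]. unfold inrange; simpl; intros; lia.
  - apply Forall_map. eapply Forall_impl; [|exact H2]. simpl; intros; lia.
  - apply Forall_map. eapply Forall_impl; [|exact H1]. unfold inrange; simpl; intros; lia.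
  - apply Forall_map. eapply Forall_impl; [|exact H2]. simpl; intros; lia.
Qed.

Lemma valid_pos m m' pi : valid m m' pi -> Forall (fun q => 1 <= fst q /\ 1 <= snd q)%nat pi.
Proof. intros [_ H]. eapply Forall_impl; [|exact H]. unfold inrange; intros; lia. Qed.

Lemma valid_concat a1 b1 a2 b2 pi1 pi2 :
  valid a1 b1 pi1 -> valid a2 b2 pi2 -> valid (a1 + a2) (b1 + b2) (pi1 ++ shift a1 b1 pi2).
Proof.
  intros [Hs1 Hr1] [Hs2 Hr2]. rewrite Forall_forall in *. split.
  - apply SS_app; auto.
    + apply (SS_map_in ltlt); auto. intros x y _ _ [? ?]. unfold ltlt; simpl; lia.
    + intros x y Hx Hy. unfold shift in Hy. apply in_map_iff in Hy. destruct Hy as [z [<- Hz]].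
      apply Hr1 in Hx. apply Hr2 in Hz. unfold inrange, ltlt in *; simpl; lia.
  - apply Forall_app. split.
    + apply Forall_forall. intros q Hq. apply Hr1 in Hq. unfold inrange in *; lia.
    + apply Forall_map, Forall_forall. intros q Hq. apply Hr2 in Hq. unfold inrange in *; simpl; lia.
Qed.

(* Every alignment of words of lengths
   (a,b) admits a cut with a1 + b1 in {T, T+1}, for any T <= a + b: this is
   the combinatorial heart of the doubling argument below. *)

Section Cuts.
Local Open Scope nat_scope.

Definition sep (pi : list (nat * nat)) (a1 b1 : nat) : Prop :=
  forall q, In q pi -> (fst q <= a1 /\ snd q <= b1) \/ (a1 < fst q /\ b1 < snd q).

Lemma all_above a b pi a1 b1 :
  valid a b pi -> (forall q, In q pi -> a1 < fst q /\ b1 < snd q) ->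
  pi = shift a1 b1 (map (fun q => (fst q - a1, snd q - b1)) pi) /\
  valid (a - a1) (b - b1) (map (fun q => (fst q - a1, snd q - b1)) pi).
Proof.
  intros [Hs Hr] H. split.
  - unfold shift. rewrite map_map. simpl. rewrite <- (map_id pi) at 1. apply map_ext_in.
    intros [u v] Hq. apply H in Hq. simpl in *. f_equal; lia.
  - split.
    + apply (SS_map_in ltlt); auto. intros x y Hx Hy [? ?]. apply H in Hx; apply H in Hy.
      unfold ltlt; simpl; lia.
    + apply Forall_map. rewrite Forall_forall in *. intros q Hq. specialize (Hr q Hq).
      specialize (H q Hq). unfold inrange in *; simpl; lia.
Qed.

Lemma decomp a b pi a1 b1 :
  valid a b pi -> a1 <= a -> b1 <= b -> sep pi a1 b1 ->
  exists pi1 pi2, pi = pi1 ++ shift a1 b1 pi2 /\ valid a1 b1 pi1 /\ valid (a - a1) (b - b1) pi2.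
Proof.
  induction pi as [|q pi IH]; intros Hv Ha Hb Hsep.
  - exists [], []. repeat split; constructor.
  - destruct Hv as [Hs Hr]. pose proof (SS_forall _ _ _ Hs) as Hq.
    apply StronglySorted_inv in Hs. destruct Hs as [Hs _]. inversion Hr; subst.
    destruct (Hsep q (or_introl eq_refl)) as [Hle|Hgt].
    + destruct (IH (conj Hs H2) Ha Hb) as [pi1 [pi2 [Heq [Hv1 Hv2]]]].
      { intros r Hr'. apply Hsep; simpl; auto. }
      exists (q :: pi1), pi2. split; [rewrite Heq; reflexivity|]. split; auto.
      destruct Hv1 as [Hs1 Hr1]. split.
      * constructor; auto. apply Forall_forall. intros r Hr'. apply Hq. rewrite Heq. apply in_or_app; auto.
      * constructor; auto. unfold inrange in *; lia.
    + exists []. exists (map (fun q => (fst q - a1, snd q - b1)) (q :: pi)).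
      assert (Hall : forall r, In r (q :: pi) -> a1 < fst r /\ b1 < snd r).
      { intros r [<-|Hr']; auto. apply Hq in Hr'. destruct Hr'. lia. }
      destruct (all_above a b (q :: pi) a1 b1) as [E V]; auto.
      { split; auto. constructor; auto. apply Forall_forall; auto. }
      split; [exact E|]. split; auto. apply valid_nil.
Qed.

Lemma filter_all_false {A} (P : A -> bool) l :
  (forall r, In r l -> P r = false) -> filter P l = [] /\ filter (fun q => negb (P q)) l = l.
Proof.
  induction l as [|r l IH]; intros H; simpl; auto.
  rewrite H by (simpl; auto). simpl. destruct IH as [-> ->]; auto.
  intros; apply H; simpl; auto.
Qed.

Lemma SS_split_filter (P : nat * nat -> bool) pi :
  StronglySorted ltlt pi -> (forall q r, ltlt q r -> P r = true -> P q = true) ->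
  pi = filter P pi ++ filter (fun q => negb (P q)) pi.
Proof.
  induction pi as [|q pi IH]; intros Hs HP; simpl; auto.
  pose proof (SS_forall _ _ _ Hs) as Hq. apply StronglySorted_inv in Hs. destruct Hs as [Hs _].
  destruct (P q) eqn:E; simpl.
  - rewrite <- IH; auto.
  - destruct (filter_all_false P pi) as [-> ->]; auto.
    intros r Hr. destruct (P r) eqn:E'; auto. rewrite (HP q r) in E; auto.
Qed.

Lemma last_below l :
  StronglySorted ltlt l -> exists z,
    (forall q, In q l -> fst q <= fst z /\ snd q <= snd z) /\ (z = (0, 0) \/ In z l).
Proof.
  destruct l as [|q0 l'] eqn:El; intros Hs.
  - exists (0, 0). split; auto. intros q [].
  - destruct (exists_last (l := q0 :: l')) as [l0 [z Ez]]; [discriminate|].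
    rewrite <- El in *. rewrite Ez in Hs |- *. exists z. split.
    + intros q Hq. apply in_app_or in Hq. destruct Hq as [Hq|[<-|[]]]; [|lia].
      apply SS_app_inv in Hs. destruct Hs as [_ [_ Hc]].
      destruct (Hc q z Hq (or_introl eq_refl)); lia.
    + right. apply in_or_app. simpl; auto.
Qed.

Lemma first_above a b l :
  StronglySorted ltlt l -> exists w,
    (forall q, In q l -> fst w <= fst q /\ snd w <= snd q) /\ (w = (S a, S b) \/ In w l).
Proof.
  destruct l as [|w l'] ; intros Hs.
  - exists (S a, S b). split; auto. intros q [].
  - exists w. split; [|right; simpl; auto].
    intros q [<-|Hq]; [lia|]. destruct (SS_forall _ _ _ Hs q Hq); lia.
Qed.

Lemma box a b pi (P : nat * nat -> bool) :
  valid a b pi -> (forall q r, ltlt q r -> P r = true -> P q = true) ->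
  exists z w : nat * nat,
    fst z < fst w /\ snd z < snd w /\ fst w <= S a /\ snd w <= S b /\
    (forall q, In q pi -> P q = true -> fst q <= fst z /\ snd q <= snd z) /\
    (forall q, In q pi -> P q = false -> fst w <= fst q /\ snd w <= snd q) /\
    (z = (0, 0) \/ (P z = true /\ In z pi)) /\
    (w = (S a, S b) \/ (P w = false /\ In w pi)).
Proof.
  intros [Hs Hr] HP. rewrite Forall_forall in Hr.
  set (l1 := filter P pi). set (l2 := filter (fun q => negb (P q)) pi).
  assert (Hl1 : forall q, In q l1 <-> In q pi /\ P q = true) by (intros; apply filter_In).
  assert (Hl2 : forall q, In q l2 <-> In q pi /\ P q = false).
  { intros q. unfold l2. rewrite filter_In, negb_true_iff. reflexivity. }
  pose proof (SS_split_filter P pi Hs HP) as Hsplit. rewrite Hsplit in Hs.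
  apply SS_app_inv in Hs. destruct Hs as [Hs1 [Hs2 Hcross]]. fold l1 l2 in Hs1, Hs2, Hcross.
  destruct (last_below l1 Hs1) as [z [Hz1 Hz2]].
  destruct (first_above a b l2 Hs2) as [w [Hw1 Hw2]].
  exists z, w.
  assert (Hzw : fst z < fst w /\ snd z < snd w).
  { destruct Hz2 as [->|Hz]; destruct Hw2 as [->|Hw]; simpl.
    - lia.
    - apply Hl2 in Hw. specialize (Hr w (proj1 Hw)). unfold inrange in Hr. lia.
    - apply Hl1 in Hz. specialize (Hr z (proj1 Hz)). unfold inrange in Hr. lia.
    - apply Hcross; auto. }
  assert (Hwr : fst w <= S a /\ snd w <= S b).
  { destruct Hw2 as [->|Hw]; simpl; auto. apply Hl2 in Hw.
    specialize (Hr w (proj1 Hw)). unfold inrange in Hr. lia. }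
  do 4 (split; [lia|]). split; [|split; [|split]].
  - intros q Hq HPq. apply Hz1, Hl1. auto.
  - intros q Hq HPq. apply Hw1, Hl2. auto.
  - destruct Hz2 as [->|Hz]; [left; auto | right; apply Hl1 in Hz; tauto].
  - destruct Hw2 as [->|Hw]; [left; auto | right; apply Hl2 in Hw; tauto].
Qed.

Lemma cut_x a b pi a1 :
  valid a b pi -> a1 <= a -> exists b1, b1 <= b /\ sep pi a1 b1.
Proof.
  intros Hv Ha.
  destruct (box a b pi (fun q => Nat.leb (fst q) a1) Hv)
    as [z [w [Hzw1 [Hzw2 [Hwa [Hwb [Hbelow [Habove [Hz Hw]]]]]]]]].
  { intros q r [? ?] Hr. apply Nat.leb_le in Hr. apply Nat.leb_le. lia. }
  assert (fst z <= a1).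
  { destruct Hz as [->|[E _]]; simpl; [lia|]. apply Nat.leb_le in E; auto. }
  assert (a1 < fst w).
  { destruct Hw as [->|[E _]]; simpl; [lia|]. apply Nat.leb_gt in E; auto. }
  exists (snd z). split; [lia|]. intros q Hq. destruct (Nat.leb (fst q) a1) eqn:E.
  - left. specialize (Hbelow q Hq E). apply Nat.leb_le in E. lia.
  - right. specialize (Habove q Hq E). lia.
Qed.

(* Cutting at antidiagonal level T: the cut point is chosen between the last
   pair of level <= T+1 and the first pair of level >= T+2. *)
Lemma cut_T a b pi T :
  valid a b pi -> T <= a + b ->
  exists a1 b1, a1 <= a /\ b1 <= b /\ (a1 + b1 = T \/ a1 + b1 = S T) /\ sep pi a1 b1.
Proof.
  intros Hv HT.
  destruct (box a b pi (fun q => Nat.leb (fst q + snd q) (S T)) Hv)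
    as [z [w [Hzw1 [Hzw2 [Hwa [Hwb [Hbelow [Habove [Hz Hw]]]]]]]]].
  { intros q r [? ?] Hr. apply Nat.leb_le in Hr. apply Nat.leb_le. lia. }
  assert (fst z + snd z <= S T).
  { destruct Hz as [->|[E _]]; simpl; [lia|]. apply Nat.leb_le in E; auto. }
  assert (S (S T) <= fst w + snd w).
  { destruct Hw as [->|[E _]]; simpl; [lia|]. apply Nat.leb_gt in E; lia. }
  set (s := if Nat.leb (fst z + snd z) T then T else S T).
  assert (Hs : (s = T \/ s = S T) /\ fst z + snd z <= s /\ s <= fst w + snd w - 2).
  { unfold s. destruct (Nat.leb_spec (fst z + snd z) T); lia. }
  set (a1 := Nat.min (fst w - 1) (s - snd z)).
  exists a1, (s - a1).
  assert (fst z <= a1 < fst w /\ snd z <= s - a1 < snd w) by (unfold a1; lia).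
  split; [lia|]. split; [lia|]. split; [lia|].
  intros q Hq. destruct (Nat.leb (fst q + snd q) (S T)) eqn:E.
  - left. specialize (Hbelow q Hq E). lia.
  - right. specialize (Habove q Hq E). lia.
Qed.

End Cuts.

Lemma fold_Rmax_ge d l v : In v l -> v <= fold_right Rmax d l.
Proof.
  induction l; simpl; intros H; [destruct H|]. destruct H as [<-|H].
  - apply Rmax_l.
  - eapply Rle_trans; [apply IHl; auto| apply Rmax_r].
Qed.

Lemma fold_Rmax_le d l c : d <= c -> (forall v, In v l -> v <= c) -> fold_right Rmax d l <= c.
Proof.
  induction l; simpl; intros Hd H; auto. apply Rmax_lub; auto.
Qed.

Lemma LS_ge sc x y pi : valid (length x) (length y) pi -> align_score sc x y pi <= LS sc x y.
Proof.
  intros H. unfold LS. apply fold_Rmax_ge. apply in_map. apply align_iff; auto.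
Qed.

Lemma LS_le sc x y c :
  (forall pi, valid (length x) (length y) pi -> align_score sc x y pi <= c) -> LS sc x y <= c.
Proof.
  intros H. unfold LS. apply fold_Rmax_le.
  - apply H, valid_nil.
  - intros v Hv. apply in_map_iff in Hv. destruct Hv as [pi [<- Hpi]]. apply H, align_iff; auto.
Qed.

(* Superadditivity: concatenating optimal alignments. *)
Lemma LS_super sc x1 y1 x2 y2 : LS sc x1 y1 + LS sc x2 y2 <= LS sc (x1 ++ x2) (y1 ++ y2).
Proof.
  set (M := LS sc (x1 ++ x2) (y1 ++ y2)).
  assert (Hpair : forall pi1 pi2, valid (length x1) (length y1) pi1 -> valid (length x2) (length y2) pi2 ->
            align_score sc x1 y1 pi1 + align_score sc x2 y2 pi2 <= M).
  { intros pi1 pi2 H1 H2. rewrite <- score_split; [| destruct H1; auto | apply (valid_pos _ _ _ H2)].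
    apply LS_ge. rewrite !length_app. apply valid_concat; auto. }
  enough (LS sc x2 y2 <= M - LS sc x1 y1) by lra.
  apply LS_le. intros pi2 H2.
  enough (LS sc x1 y1 <= M - align_score sc x2 y2 pi2) by lra.
  apply LS_le. intros pi1 H1. specialize (Hpair pi1 pi2 H1 H2). lra.
Qed.

Lemma score_decomp sc (x y : list nat) pi a1 b1 :
  valid (length x) (length y) pi -> (a1 <= length x)%nat -> (b1 <= length y)%nat -> sep pi a1 b1 ->
  exists pi1 pi2, valid a1 b1 pi1 /\ valid (length x - a1) (length y - b1) pi2 /\
    forall x' y' : list nat, length x' = length x -> length y' = length y ->
      align_score sc x' y' pi = align_score sc (firstn a1 x') (firstn b1 y') pi1 +
                                align_score sc (skipn a1 x') (skipn b1 y') pi2.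
Proof.
  intros Hv Ha Hb Hs. destruct (decomp _ _ _ _ _ Hv Ha Hb Hs) as [pi1 [pi2 [E [V1 V2]]]].
  exists pi1, pi2. split; auto. split; auto. intros x' y' Hx Hy.
  rewrite <- (firstn_skipn a1 x') at 1. rewrite <- (firstn_skipn b1 y') at 1.
  rewrite E.
  assert (Hx1 : length (firstn a1 x') = a1) by (rewrite length_firstn; lia).
  assert (Hy1 : length (firstn b1 y') = b1) by (rewrite length_firstn; lia).
  replace (shift a1 b1 pi2) with (shift (length (firstn a1 x')) (length (firstn b1 y')) pi2)
    by (rewrite Hx1, Hy1; reflexivity).
  apply score_split.
  - rewrite Hx1, Hy1. destruct V1; auto.
  - apply (valid_pos _ _ _ V2).
Qed.

Lemma LS_cutT sc (x y : list nat) T c :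
  (T <= length x + length y)%nat ->
  (forall a1 b1, (a1 <= length x)%nat -> (b1 <= length y)%nat -> (a1 + b1 = T \/ a1 + b1 = S T)%nat ->
     LS sc (firstn a1 x) (firstn b1 y) + LS sc (skipn a1 x) (skipn b1 y) <= c) ->
  LS sc x y <= c.
Proof.
  intros HT H. apply LS_le. intros pi Hv.
  destruct (cut_T _ _ _ T Hv HT) as [a1 [b1 [Ha [Hb [Hab Hs]]]]].
  destruct (score_decomp sc x y pi a1 b1 Hv Ha Hb Hs) as [pi1 [pi2 [V1 [V2 E]]]].
  rewrite E by auto. eapply Rle_trans; [|apply (H a1 b1); auto].
  apply Rplus_le_compat; apply LS_ge.
  - rewrite !length_firstn. replace (Nat.min a1 (length x)) with a1 by lia.
    replace (Nat.min b1 (length y)) with b1 by lia. auto.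
  - rewrite !length_skipn. auto.
Qed.


Lemma in_Astar_Some k c : (c < k)%nat -> In (Some c) (Astar k).
Proof. intros H. right. apply in_map, in_seq. lia. Qed.

Lemma in_Astar_None k : In None (Astar k).
Proof. left; auto. Qed.

Lemma letter_in_Astar k x j : (1 <= k)%nat -> is_word k x -> In (letter_at x j) (Astar k).
Proof.
  intros Hk Hx. unfold letter_at. apply in_Astar_Some.
  destruct (Nat.lt_ge_cases (j - 1) (length x)) as [H|H].
  - unfold is_word in Hx. rewrite Forall_forall in Hx. apply Hx, nth_In; auto.
  - rewrite nth_overflow by auto. lia.
Qed.

Lemma Sdelta_bound k sc c d e :
  In c (Astar k) -> In d (Astar k) -> In e (Astar k) -> Rabs (sc c d - sc c e) <= Sdelta k sc.
Proof.
  intros Hc Hd He. unfold Sdelta. apply fold_Rmax_ge.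
  apply in_flat_map. exists c. split; auto. apply in_flat_map. exists d. split; auto.
  apply in_map_iff. exists e. split; auto.
Qed.

Lemma score_bounded k (sc : option nat -> option nat -> R) :
  exists B, forall d e, In d (Astar k) -> In e (Astar k) -> Rabs (sc d e) <= B.
Proof.
  exists (fold_right Rmax 0 (map (fun q => Rabs (sc (fst q) (snd q))) (list_prod (Astar k) (Astar k)))).
  intros d e Hd He. apply fold_Rmax_ge.
  apply (in_map (fun q => Rabs (sc (fst q) (snd q))) _ (d, e)). apply in_prod; auto.
Qed.

Lemma valid_1 m rho : valid 1 m rho -> rho = [] \/ exists nu, rho = [(1%nat, nu)] /\ (1 <= nu <= m)%nat.
Proof.
  intros [Hs Hr]. rewrite Forall_forall in Hr. destruct rho as [|q [|r t]]; auto.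
  - right. specialize (Hr _ (or_introl eq_refl)).
    destruct q as [u v]. unfold inrange in Hr; simpl in Hr.
    exists v. split; [f_equal; f_equal; lia | lia].
  - exfalso. pose proof (SS_forall _ _ _ Hs r (or_introl eq_refl)) as [H1 _].
    pose proof (Hr q (or_introl eq_refl)). pose proof (Hr r (or_intror (or_introl eq_refl))).
    unfold inrange in *. lia.
Qed.

Lemma firstn_len_app (u w : list nat) : firstn (length u) (u ++ w) = u.
Proof. rewrite <- (Nat.add_0_r (length u)), firstn_app_2. apply app_nil_r. Qed.

Lemma skipn_len_app (u w : list nat) : skipn (length u) (u ++ w) = w.
Proof. induction u; simpl; auto. Qed.

(* Isolating one letter: for any alignment of u ++ c :: v with y, the letter
   c is either gapped or matched, and the score is a constant plus the score
   of the single letter against a factor z of y; this holds uniformly in c. *)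
Lemma isolate_letter sc u v y c pi :
  valid (length (u ++ c :: v)) (length y) pi ->
  exists b1 b2 rho C, valid 1 (length (firstn b2 (skipn b1 y))) rho /\
    forall a, align_score sc (u ++ a :: v) y pi = C + align_score sc [a] (firstn b2 (skipn b1 y)) rho.
Proof.
  intros Hpi.
  destruct (cut_x _ _ _ (length u) Hpi) as [b1 [Hb1 Hsep]]; [rewrite length_app; lia|].
  destruct (score_decomp sc (u ++ c :: v) y pi (length u) b1 Hpi) as [pi1 [pi2 [V1 [V2 E]]]];
    auto; [rewrite length_app; lia|].
  rewrite length_app in V2.
  replace (length u + length (c :: v) - length u)%nat with (length (c :: v)) in V2 by lia.
  destruct (cut_x _ _ _ 1 V2) as [b2 [Hb2 Hsep2]]; [simpl; lia|].
  destruct (score_decomp sc (c :: v) (skipn b1 y) pi2 1 b2) as [r1 [r2 [W1 [W2 E2]]]];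
    [rewrite length_skipn; auto | simpl; lia | rewrite length_skipn; lia | auto |].
  exists b1, b2, r1, (align_score sc u (firstn b1 y) pi1 +
                      align_score sc v (skipn b2 (skipn b1 y)) r2).
  split.
  - rewrite length_firstn, length_skipn. replace (Nat.min b2 (length y - b1)) with b2 by lia.
    exact W1.
  - intros a. rewrite E by (rewrite ?length_app; reflexivity).
    rewrite firstn_len_app, skipn_len_app, E2 by reflexivity. simpl. ring.
Qed.

Definition swap (pi : list (nat * nat)) := map (fun q => (snd q, fst q)) pi.

Lemma existsb_map_comp {A B} (f : B -> bool) (g : A -> B) l :
  existsb f (map g l) = existsb (fun a => f (g a)) l.
Proof. induction l as [|a l IH]; simpl; auto. rewrite IH; auto. Qed.

Lemma valid_swap m m' pi : valid m m' pi -> valid m' m (swap pi).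
Proof.
  intros [Hs Hr]. split.
  - apply (SS_map_in ltlt); auto. intros x y _ _ [? ?]. unfold ltlt; simpl; lia.
  - apply Forall_map. eapply Forall_impl; [|exact Hr]. unfold inrange; simpl; intros; lia.
Qed.

Section Scores.

Variable k : nat.
Variable sc : option nat -> option nat -> R.
Hypothesis k_pos : (1 <= k)%nat.
Hypothesis sc_sym : forall c d, In c (Astar k) -> In d (Astar k) -> sc c d = sc d c.

Lemma score_swap x y pi :
  is_word k x -> is_word k y -> align_score sc x y pi = align_score sc y x (swap pi).
Proof.
  intros Hx Hy. unfold align_score, swap. rewrite !map_map. simpl.
  rewrite (sumR_map_ext (fun q => sc (letter_at x (fst q)) (letter_at y (snd q)))
                        (fun q => sc (letter_at y (snd q)) (letter_at x (fst q)))).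
  2:{ intros; apply sc_sym; apply letter_in_Astar; auto. }
  rewrite !(filter_ext
    (fun j => negb (existsb (fun q => Nat.eqb (fst q) j) (map (fun q => (snd q, fst q)) pi)))
    (fun j => negb (existsb (fun q => Nat.eqb (snd q) j) pi))).
  2:{ intros j. rewrite existsb_map_comp. reflexivity. }
  rewrite !(filter_ext
    (fun j => negb (existsb (fun q => Nat.eqb (snd q) j) (map (fun q => (snd q, fst q)) pi)))
    (fun j => negb (existsb (fun q => Nat.eqb (fst q) j) pi))).
  2:{ intros j. rewrite existsb_map_comp. reflexivity. }
  rewrite (sumR_map_ext (fun j => sc (letter_at x j) None) (fun j => sc None (letter_at x j))).
  2:{ intros; apply sc_sym; [apply letter_in_Astar; auto| apply in_Astar_None]. }
  rewrite (sumR_map_ext (fun j => sc None (letter_at y j)) (fun j => sc (letter_at y j) None)).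
  2:{ intros; apply sc_sym; [apply in_Astar_None|apply letter_in_Astar; auto]. }
  lra.
Qed.

Lemma LS_sym x y : is_word k x -> is_word k y -> LS sc x y = LS sc y x.
Proof.
  intros Hx Hy. apply Rle_antisym; apply LS_le; intros pi Hv.
  - rewrite (score_swap x y pi) by auto. apply LS_ge, valid_swap; auto.
  - rewrite (score_swap y x pi) by auto. apply LS_ge, valid_swap; auto.
Qed.

Lemma single_letter_diff c c' z rho :
  is_word k z -> (c < k)%nat -> (c' < k)%nat -> valid 1 (length z) rho ->
  align_score sc [c] z rho <= align_score sc [c'] z rho + Sdelta k sc.
Proof.
  intros Hz Hc Hc' Hrho.
  assert (Hdiff : forall X, In X (Astar k) -> sc (Some c) X <= sc (Some c') X + Sdelta k sc).
  { intros X HX. pose proof (Sdelta_bound k sc X (Some c) (Some c') HX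
      (in_Astar_Some k c Hc) (in_Astar_Some k c' Hc')) as HD.
    rewrite (sc_sym X (Some c)), (sc_sym X (Some c')) in HD by auto using in_Astar_Some.
    apply Rabs_le_inv in HD. lra. }
  destruct (valid_1 _ _ Hrho) as [->|[nu [-> _]]].
  - pose proof (Hdiff None (in_Astar_None k)). unfold align_score, letter_at, sumR. simpl. lra.
  - pose proof (Hdiff (letter_at z nu) (letter_in_Astar k z nu k_pos Hz)).
    unfold align_score, letter_at, sumR in *. simpl. lra.
Qed.

Lemma LS_change_letter u v y c c' :
  is_word k y -> (c < k)%nat -> (c' < k)%nat ->
  LS sc (u ++ c :: v) y <= LS sc (u ++ c' :: v) y + Sdelta k sc.
Proof.
  intros Hy Hc Hc'. apply LS_le. intros pi Hpi.
  destruct (isolate_letter sc u v y c pi Hpi) as [b1 [b2 [rho [C [Hrho HS]]]]].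
  assert (Hpi' : valid (length (u ++ c' :: v)) (length y) pi) by (rewrite !length_app in *; auto).
  pose proof (LS_ge sc _ _ _ Hpi') as Hopt. rewrite HS in Hopt |- *.
  pose proof (single_letter_diff c c' _ rho
    (is_word_firstn k b2 _ (is_word_skipn k b1 y Hy)) Hc Hc' Hrho). lra.
Qed.

Lemma LS_bounded_diff_left y : is_word k y -> bounded_diff k (fun x => LS sc x y) (Sdelta k sc).
Proof.
  intros Hy u v c c' _ _ Hc Hc'. apply Rabs_le.
  pose proof (LS_change_letter u v y c c' Hy Hc Hc').
  pose proof (LS_change_letter u v y c' c Hy Hc' Hc). lra.
Qed.

Lemma LS_bounded_diff_right x : is_word k x -> bounded_diff k (fun y => LS sc x y) (Sdelta k sc).
Proof.
  intros Hx u v c c' Hu Hv Hc Hc'.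
  assert (Hw : forall a, (a < k)%nat -> is_word k (u ++ a :: v))
    by (intros; apply is_word_app; auto; constructor; auto).
  rewrite (LS_sym x), (LS_sym x) by auto. apply LS_bounded_diff_left; auto.
Qed.

Variable B : R.
Hypothesis sc_bounded : forall d e, In d (Astar k) -> In e (Astar k) -> Rabs (sc d e) <= B.

Lemma B_nonneg : 0 <= B.
Proof.
  pose proof (sc_bounded None None (in_Astar_None k) (in_Astar_None k)).
  pose proof (Rabs_pos (sc None None)). lra.
Qed.

Lemma score_nil_split (z1 z2 : list nat) :
  align_score sc [] (z1 ++ z2) [] = align_score sc [] z1 [] + align_score sc [] z2 [].
Proof.
  change (align_score sc ([] ++ []) (z1 ++ z2) ([] ++ shift (length (@nil nat)) (length z1) []) =
          align_score sc [] z1 [] + align_score sc [] z2 []).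
  apply score_split; constructor.
Qed.

Lemma match_one_letter c z nu : (1 <= nu <= length z)%nat ->
  align_score sc [c] z [(1%nat, nu)] + sc None (letter_at z nu) =
  align_score sc [] z [] + sc (Some c) (letter_at z nu).
Proof.
  intros Hnu.
  set (z1 := firstn (nu - 1) z). set (z2 := skipn (nu - 1) z).
  assert (Hz12 : z = z1 ++ z2) by (symmetry; apply firstn_skipn).
  assert (Hl1 : length z1 = (nu - 1)%nat) by (unfold z1; rewrite length_firstn; lia).
  assert (Hl2 : length z2 = (length z - (nu - 1))%nat) by (unfold z2; rewrite length_skipn; lia).
  destruct z2 as [|d r] eqn:Ez2; [simpl in Hl2; lia|].
  assert (Hletter : letter_at z nu = Some d).
  { unfold letter_at. rewrite Hz12, app_nth2 by lia. rewrite Hl1, Nat.sub_diag. reflexivity. }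
  assert (Hmatch : align_score sc [c] z [(1%nat, nu)] =
                   align_score sc [] z1 [] + align_score sc [c] [d] [(1%nat, 1%nat)] +
                   align_score sc [] r []).
  { rewrite Hz12. change [c] with ([] ++ [c]).
    replace [(1%nat, nu)] with ([] ++ shift (length (@nil nat)) (length z1) [(1%nat, 1%nat)])
      by (rewrite Hl1; unfold shift; simpl; do 3 f_equal; lia).
    rewrite score_split by repeat constructor.
    change (d :: r) with ([d] ++ r). change [c] with ([c] ++ []) at 1.
    change [(1%nat, 1%nat)] with ([(1%nat, 1%nat)] ++ shift (length [c]) (length [d]) []) at 1.
    rewrite score_split by repeat constructor. rewrite app_nil_l. ring. }
  assert (Hgaps : align_score sc [] z [] =
                  align_score sc [] z1 [] + align_score sc [] [d] [] + align_score sc [] r []).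
  { rewrite Hz12, score_nil_split. change (d :: r) with ([d] ++ r). rewrite score_nil_split. ring. }
  rewrite Hmatch, Hgaps, Hletter. unfold align_score, letter_at, sumR. simpl. ring.
Qed.

Lemma small_snoc c z rho :
  is_word k z -> (c < k)%nat -> valid 1 (length z) rho ->
  align_score sc [c] z rho <= align_score sc [] z [] + 2 * B.
Proof.
  intros Hz Hc Hv. pose proof B_nonneg.
  assert (Hbound : forall X, In X (Astar k) -> - B <= sc (Some c) X <= B).
  { intros X HX. apply Rabs_le_inv, sc_bounded; auto using in_Astar_Some. }
  destruct (valid_1 _ _ Hv) as [->|[nu [-> Hnu]]].
  - replace (align_score sc [c] z []) with (sc (Some c) None + align_score sc [] z [])
      by (unfold align_score, letter_at, sumR; simpl; ring).
    pose proof (Hbound None (in_Astar_None k)). lra.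
  - pose proof (match_one_letter c z nu Hnu) as Hm.
    pose proof (Hbound _ (letter_in_Astar k z nu k_pos Hz)).
    pose proof (sc_bounded None (letter_at z nu) (in_Astar_None k) (letter_in_Astar k z nu k_pos Hz)) as HG.
    apply Rabs_le_inv in HG. lra.
Qed.

Lemma LS_snoc x y c :
  is_word k x -> is_word k y -> (c < k)%nat ->
  LS sc (x ++ [c]) y <= LS sc x y + 2 * B.
Proof.
  intros Hx Hy Hc. apply LS_le. intros pi Hpi.
  destruct (cut_x _ _ _ (length x) Hpi) as [b1 [Hb1 Hsep]]; [rewrite length_app; lia|].
  destruct (score_decomp sc (x ++ [c]) y pi (length x) b1 Hpi) as [pi1 [pi2 [V1 [V2 E]]]]; auto.
  { rewrite length_app; lia. }
  rewrite E by auto. rewrite firstn_len_app, skipn_len_app.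
  rewrite length_app in V2. replace (length x + length [c] - length x)%nat with 1%nat in V2 by (simpl; lia).
  assert (H1 : align_score sc [c] (skipn b1 y) pi2 <= align_score sc [] (skipn b1 y) [] + 2 * B).
  { apply small_snoc; auto. apply is_word_skipn; auto. rewrite length_skipn; auto. }
  assert (H2 : align_score sc x (firstn b1 y) pi1 + align_score sc [] (skipn b1 y) [] <= LS sc x y).
  { assert (Hl : length (firstn b1 y) = b1) by (rewrite length_firstn; lia).
    assert (Eq : align_score sc (x ++ []) (firstn b1 y ++ skipn b1 y)
                   (pi1 ++ shift (length x) (length (firstn b1 y)) []) =
                 align_score sc x (firstn b1 y) pi1 + align_score sc [] (skipn b1 y) []).
    { apply score_split; [rewrite Hl; destruct V1; auto| constructor]. }
    rewrite app_nil_r, firstn_skipn in Eq. simpl in Eq. rewrite app_nil_r in Eq. rewrite <- Eq.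
    apply LS_ge. apply valid_widen with (length x) b1; auto; lia. }
  lra.
Qed.
End Scores.

Lemma ln_lt_id y : 0 < y -> ln y < y.
Proof.
  intros H. pose proof (exp_ineq1_le y). rewrite <- (ln_exp y) at 2.
  apply ln_increasing; auto. lra.
Qed.

Lemma nat_large x : exists K : nat, x <= INR K.
Proof.
  destruct (archimed x) as [H1 _]. destruct (Z_le_gt_dec 0 (up x)) as [Hz|Hz].
  - exists (Z.to_nat (up x)). rewrite INR_IZR_INZ, Z2Nat.id by auto. lra.
  - exists 0%nat. assert (Hz2 : (up x < 0)%Z) by lia. apply IZR_lt in Hz2. simpl. lra.
Qed.

Lemma ln_le_4 n : 1 <= n -> ln n <= 4 * sqrt (sqrt n).
Proof.
  intros Hn. set (y := sqrt (sqrt n)).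
  assert (Hy : 0 < y) by (unfold y; apply sqrt_lt_R0, sqrt_lt_R0; lra).
  assert (Hn' : n = y * y * (y * y)).
  { unfold y. rewrite sqrt_sqrt by apply sqrt_pos. rewrite sqrt_sqrt; lra. }
  rewrite Hn', !ln_mult by (try apply Rmult_lt_0_compat; auto).
  pose proof (ln_lt_id y Hy). lra.
Qed.

Lemma eventually_ln_ge A : exists K : nat, forall n, (K <= n)%nat -> A <= ln (INR n).
Proof.
  destruct (nat_large (exp A)) as [K HK]. exists K. intros n Hn.
  rewrite <- (ln_exp A). apply ln_le_mono; [apply exp_pos|].
  eapply Rle_trans; [exact HK|]. apply le_INR; auto.
Qed.

Lemma eventually_ln_le_sqrt A : 0 < A ->
  exists K : nat, forall n, (K <= n)%nat -> ln (INR n) <= A * sqrt (INR n).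
Proof.
  intros HA. set (z := 4 / A). destruct (nat_large (z * z * (z * z) + 1)) as [K HK].
  exists K. intros n Hn. assert (HnK : INR K <= INR n) by (apply le_INR; auto).
  assert (Hz : 0 < z) by (unfold z; apply Rdiv_lt_0_compat; lra).
  assert (Hn1 : 1 <= INR n) by nra.
  set (y := sqrt (sqrt (INR n))).
  assert (Hy : 0 < y) by (unfold y; apply sqrt_lt_R0, sqrt_lt_R0; lra).
  assert (Hn' : INR n = y * y * (y * y)).
  { unfold y. rewrite sqrt_sqrt by apply sqrt_pos. rewrite sqrt_sqrt; lra. }
  assert (Hs : sqrt (INR n) = y * y) by (unfold y; rewrite sqrt_sqrt; [reflexivity | apply sqrt_pos]).
  assert (Hyz : z <= y).
  { destruct (Rle_dec z y) as [|Hc]; auto. exfalso.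
    assert (y * y < z * z) by nra. assert (y * y * (y * y) < z * z * (z * z)) by nra. lra. }
  pose proof (ln_le_4 (INR n) Hn1) as H4. fold y in H4. rewrite Hs.
  assert (4 = A * z) by (unfold z; field; lra). nra.
Qed.

Lemma INR_ge_1 n : (1 <= n)%nat -> 1 <= INR n.
Proof. intros H. apply (le_INR 1). exact H. Qed.

Definition corr (n : nat) : R := ln (INR n) / (40 * sqrt (INR n)).

Lemma corr_nonneg n : (1 <= n)%nat -> 0 <= corr n.
Proof.
  intros H. pose proof (INR_ge_1 n H).
  assert (0 <= ln (INR n)) by (rewrite <- ln_1; apply ln_le_mono; lra).
  assert (0 < sqrt (INR n)) by (apply sqrt_lt_R0; lra).
  unfold corr, Rdiv. apply Rmult_le_pos; [lra|]. left; apply Rinv_0_lt_compat; lra.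
Qed.

Lemma corr_double n : (1 <= n)%nat ->
  corr (2 * n) <= (1 + ln (INR n)) / (56 * sqrt (INR n)).
Proof.
  intros Hn. pose proof (INR_ge_1 n Hn) as Hn1.
  assert (Hsqrt2 : 1.4 <= sqrt 2).
  { replace 1.4 with (sqrt (1.4 * 1.4)) by (apply sqrt_square; lra). apply sqrt_le_1_alt. lra. }
  assert (Hln2 : 0 <= ln 2 <= 1).
  { split; [rewrite <- ln_1 | rewrite <- (ln_exp 1)]; apply ln_le_mono; try lra.
    pose proof (exp_ineq1_le 1). lra. }
  assert (Hr : 1 <= sqrt (INR n)) by (rewrite <- sqrt_1; apply sqrt_le_1_alt; lra).
  assert (HL : 0 <= ln (INR n)) by (rewrite <- ln_1; apply ln_le_mono; lra).
  unfold corr. rewrite mult_INR, ln_mult, sqrt_mult by (simpl; lra). simpl (INR 2).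
  replace (1 + 1) with 2 by lra. unfold Rdiv. apply Rmult_le_compat; try lra.
  - left. apply Rinv_0_lt_compat. nra.
  - apply Rinv_le_contravar; nra.
Qed.

Lemma poly_exp_small D L c X :
  0 < D -> 0 < c -> 1 <= L -> (3 + Rabs (ln (18 * D))) / c <= L -> X <= 18 * D * exp (3 * L) ->
  X * exp (- (c * L * L)) <= 1.
Proof.
  intros HD Hc HL HL0 HX.
  assert (H18 : 18 * D = exp (ln (18 * D))) by (rewrite exp_ln; lra).
  eapply Rle_trans; [apply Rmult_le_compat_r; [left; apply exp_pos | exact HX]|].
  rewrite H18, <- !exp_plus, <- exp_0. apply exp_le_exp.
  assert (3 + Rabs (ln (18 * D)) <= c * L).
  { apply (Rmult_le_reg_r (/ c)); [apply Rinv_0_lt_compat; lra|].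
    replace (c * L * / c) with L by (field; lra). exact HL0. }
  pose proof (Rle_abs (ln (18 * D))). pose proof (Rabs_pos (ln (18 * D))). nra.
Qed.

(* How large ln m must be for the normalized doubling step to be decreasing. *)
Definition ln_threshold (B D : R) : R :=
  Rmax 1 (Rmax ((3 + Rabs (ln (18 * D))) / (/ 280 * / 280 / (7.2 * (D * D))))
               ((280 * (3 * B + 1) + 10) / 3)).

Lemma tail_exponent n D :
  (1 <= n)%nat -> 0 < D ->
  exp (- (0.95 * sqrt (INR n) * ln (INR n) * (0.95 * sqrt (INR n) * ln (INR n)) /
          (3.6 * INR (n + n) * (D * D))))
  <= Rpower (INR n) (- (1 / (8 * D ^ 2) * ln (INR n))).
Proof.
  intros Hn HD. pose proof (INR_ge_1 n Hn).
  set (L := ln (INR n)). set (r := sqrt (INR n)).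
  assert (Hr2 : r * r = INR n) by (apply sqrt_sqrt; lra).
  unfold Rpower. fold L. apply exp_le_exp. rewrite plus_INR, <- Hr2.
  assert (Hr : 0 < r) by (unfold r; apply sqrt_lt_R0; lra).
  replace (- (0.95 * r * L * (0.95 * r * L) / (3.6 * (r * r + r * r) * (D * D))))
    with (- (9025 / 72000) * (L * L) / (D * D))
    by (replace 3.6 with (36 / 10) by lra; replace 0.95 with (95 / 100) by lra; field; lra).
  replace (- (1 / (8 * D ^ 2) * L) * L) with (- (1 / 8) * (L * L) / (D * D)) by (field; lra).
  unfold Rdiv. apply Rmult_le_compat_r; [left; apply Rinv_0_lt_compat; nra | nra].
Qed.


Section MeanScores.

Variable k : nat.
Variable p : nat -> R.
Variable sc : option nat -> option nat -> R.
Hypothesis k_pos : (1 <= k)%nat.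
Hypothesis p_nonneg : forall i, (i < k)%nat -> 0 <= p i.
Hypothesis p_sum : sumR (map p (seq 0 k)) = 1.
Hypothesis sc_sym : forall c d, In c (Astar k) -> In d (Astar k) -> sc c d = sc d c.

Definition mean_score (a b : nat) : R := Ew k p a (fun x => Ew k p b (fun y => LS sc x y)).

Definition max_mean (s : nat) : R :=
  fold_right Rmax (mean_score 0 s) (map (fun a => mean_score a (s - a)) (seq 0 (S s))).

Lemma mean_score_sym a b : mean_score a b = mean_score b a.
Proof.
  unfold mean_score. rewrite Ew_fubini. apply Ew_ext. intros y _ Hy.
  apply Ew_ext. intros x _ Hx. apply (LS_sym k); auto.
Qed.

Lemma mean_score_super a b a' b' :
  mean_score a b + mean_score a' b' <= mean_score (a + a') (b + b').
Proof.
  unfold mean_score. rewrite <- Ew_blocks by auto. apply Ew_le; auto. intros x _ _.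
  rewrite <- Ew_blocks by auto. apply Ew_le; auto. intros y _ _.
  rewrite <- (firstn_skipn a x) at 3. rewrite <- (firstn_skipn b y) at 3. apply LS_super.
Qed.

Variable B : R.
Hypothesis sc_bounded : forall d e, In d (Astar k) -> In e (Astar k) -> Rabs (sc d e) <= B.

Lemma mean_score_snoc a b : mean_score (S a) b <= mean_score a b + 2 * B.
Proof.
  unfold mean_score. replace (S a) with (a + 1)%nat by lia.
  rewrite Ew_split, <- Ew_add_const by auto. apply Ew_le; auto. intros x1 _ Hx1.
  rewrite <- (Ew_const k p p_sum 1 (Ew k p b (fun y => LS sc x1 y) + 2 * B)).
  apply Ew_le; auto. intros x2 Hl Hx2.
  rewrite <- Ew_add_const by auto. apply Ew_le; auto. intros y _ Hy.
  destruct x2 as [|c [|]]; try (simpl in Hl; lia). inversion Hx2; subst.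
  apply (LS_snoc k); auto.
Qed.

Lemma mean_score_snoc_right a b : mean_score a (S b) <= mean_score a b + 2 * B.
Proof. rewrite (mean_score_sym a), (mean_score_sym a b). apply mean_score_snoc. Qed.

Lemma max_mean_ge a b : mean_score a b <= max_mean (a + b).
Proof.
  unfold max_mean. apply fold_Rmax_ge. replace b with (a + b - a)%nat at 1 by lia.
  apply (in_map (fun a0 => mean_score a0 (a + b - a0))). apply in_seq. lia.
Qed.

Lemma max_mean_le s c :
  (forall a, (a <= s)%nat -> mean_score a (s - a) <= c) -> max_mean s <= c.
Proof.
  intros H. unfold max_mean. apply fold_Rmax_le.
  - specialize (H 0%nat ltac:(lia)). rewrite Nat.sub_0_r in H. exact H.
  - intros v Hv. apply in_map_iff in Hv. destruct Hv as [a [<- Ha]]. apply in_seq in Ha. apply H; lia.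
Qed.

Lemma max_mean_super s t : max_mean s + max_mean t <= max_mean (s + t).
Proof.
  enough (max_mean s <= max_mean (s + t) - max_mean t) by lra.
  apply max_mean_le. intros a Ha.
  enough (max_mean t <= max_mean (s + t) - mean_score a (s - a)) by lra.
  apply max_mean_le. intros a' Ha'.
  pose proof (mean_score_super a (s - a) a' (t - a')).
  pose proof (max_mean_ge (a + a') (s - a + (t - a'))).
  replace (a + a' + (s - a + (t - a')))%nat with (s + t)%nat in * by lia. lra.
Qed.

Lemma max_mean_half s : max_mean s <= mean_score s s / 2.
Proof.
  apply max_mean_le. intros a Ha.
  pose proof (mean_score_super a (s - a) (s - a) a) as H.
  rewrite (mean_score_sym (s - a) a) in H.
  replace (a + (s - a))%nat with s in H by lia. replace (s - a + a)%nat with s in H by lia. lra.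
Qed.

Lemma max_mean_snoc s : max_mean (S s) <= max_mean s + 2 * B.
Proof.
  apply max_mean_le. intros [|a] Ha.
  - rewrite Nat.sub_0_r. pose proof (mean_score_snoc_right 0 s).
    pose proof (max_mean_ge 0 s). simpl in *. lra.
  - replace (S s - S a)%nat with (s - a)%nat by lia. pose proof (mean_score_snoc a (s - a)).
    pose proof (max_mean_ge a (s - a)). replace (a + (s - a))%nat with s in * by lia. lra.
Qed.

Lemma max_mean_one : - B <= max_mean 1.
Proof.
  eapply Rle_trans; [|apply (max_mean_ge 1 0)].
  unfold mean_score. rewrite <- (Ew_const k p p_sum 1 (- B)). apply Ew_le; auto. intros x Hl Hx.
  rewrite Ew_0. destruct x as [|c [|]]; try (simpl in Hl; lia). inversion Hx as [|? ? Hc]; subst.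
  eapply Rle_trans; [|apply (LS_ge sc [c] [] []), valid_nil].
  replace (align_score sc [c] [] []) with (sc (Some c) None)
    by (unfold align_score, letter_at, sumR; simpl; ring).
  specialize (sc_bounded (Some c) None (in_Astar_Some k c Hc) (in_Astar_None k)).
  apply Rabs_le_inv in sc_bounded. lra.
Qed.


(* Cut an optimal alignment of words of total
   length 2m at a point j = (a1,b1) with a1 + b1 in {m, m+1}: L_S is at most
   the cut score L_S(x1,y1) + L_S(x2,y2), whose mean is at most
   2 max_mean m + 3B.  A union bound over the O(m^2) possible cuts and the
   exponential moment bound then control the excess over the mean. *)

Definition cut_score (a1 b1 : nat) (x y : list nat) : R :=
  LS sc (firstn a1 x) (firstn b1 y) + LS sc (skipn a1 x) (skipn b1 y).

Definition cut_mean (a b : nat) (j : nat * nat) : R :=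
  mean_score (fst j) (snd j) + mean_score (a - fst j) (b - snd j).

Definition cuts (a b T : nat) : list (nat * nat) :=
  filter (fun q => orb (Nat.eqb (fst q + snd q) T) (Nat.eqb (fst q + snd q) (S T)))
    (list_prod (seq 0 (S a)) (seq 0 (S b))).

Lemma cuts_in a b T a1 b1 : (a1 <= a)%nat -> (b1 <= b)%nat -> (a1 + b1 = T \/ a1 + b1 = S T)%nat ->
  In (a1, b1) (cuts a b T).
Proof.
  intros Ha Hb Hab. apply filter_In. split.
  - apply in_prod; apply in_seq; lia.
  - simpl. apply orb_true_iff. destruct Hab; [left|right]; apply Nat.eqb_eq; lia.
Qed.

Lemma cuts_inv a b T q : In q (cuts a b T) ->
  (fst q <= a /\ snd q <= b /\ (fst q + snd q = T \/ fst q + snd q = S T))%nat.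
Proof.
  intros H. apply filter_In in H. destruct H as [H1 H2]. destruct q as [u v].
  apply in_prod_iff in H1. destruct H1 as [H1 H1']. apply in_seq in H1, H1'. simpl in *.
  apply orb_true_iff in H2. destruct H2 as [H2|H2]; apply Nat.eqb_eq in H2; lia.
Qed.

Lemma cuts_length a b T : (length (cuts a b T) <= S a * S b)%nat.
Proof.
  eapply Nat.le_trans; [apply filter_length_le|]. rewrite length_prod, !length_seq. lia.
Qed.

Lemma cut_score_bounded_diff a a1 b1 :
  bounded_diff k (fun w => cut_score a1 b1 (firstn a w) (skipn a w)) (Sdelta k sc).
Proof.
  apply (bounded_diff_blocks k (cut_score a1 b1)); unfold cut_score.
  - intros y Hy.
    apply (bounded_diff_blocks k (fun x1 x2 => LS sc x1 (firstn b1 y) + LS sc x2 (skipn b1 y))).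
    + intros x2 _. eapply bounded_diff_plus_const; [reflexivity|].
      apply LS_bounded_diff_left; auto using is_word_firstn.
    + intros x1 _. eapply bounded_diff_plus_const; [intros; apply Rplus_comm|].
      apply LS_bounded_diff_left; auto using is_word_skipn.
  - intros x Hx.
    apply (bounded_diff_blocks k (fun y1 y2 => LS sc (firstn a1 x) y1 + LS sc (skipn a1 x) y2)).
    + intros y2 _. eapply bounded_diff_plus_const; [reflexivity|].
      apply LS_bounded_diff_right; auto using is_word_firstn.
    + intros y1 _. eapply bounded_diff_plus_const; [intros; apply Rplus_comm|].
      apply LS_bounded_diff_right; auto using is_word_skipn.
Qed.

Lemma cut_score_mean a b j : (fst j <= a)%nat -> (snd j <= b)%nat ->
  Ew k p (a + b) (fun w => cut_score (fst j) (snd j) (firstn a w) (skipn a w)) = cut_mean a b j.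
Proof.
  intros Ha Hb. rewrite (Ew_prod k p a b (cut_score (fst j) (snd j))). unfold cut_score, cut_mean, mean_score.
  rewrite (Ew_ext k p a _ (fun x => Ew k p b (fun y => LS sc (firstn (fst j) x) (firstn (snd j) y)) +
                                    Ew k p b (fun y => LS sc (skipn (fst j) x) (skipn (snd j) y))))
    by (intros; apply Ew_plus).
  rewrite Ew_plus. f_equal.
  - rewrite <- (Ew_firstn k p p_sum (fst j) a) by auto. apply Ew_ext. intros x _ _.
    apply (Ew_firstn k p p_sum (snd j) b (fun y => LS sc (firstn (fst j) x) y)); auto.
  - rewrite <- (Ew_skipn k p p_sum (fst j) a) by auto. apply Ew_ext. intros x _ _.
    apply (Ew_skipn k p p_sum (snd j) b (fun y => LS sc (skipn (fst j) x) y)); auto.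
Qed.

Lemma cut_mean_le a b m j : (a + b = 2 * m)%nat -> (1 <= m)%nat -> In j (cuts a b m) ->
  cut_mean a b j <= 2 * max_mean m + 3 * B.
Proof.
  intros Hab Hm Hj. destruct j as [a1 b1]. apply cuts_inv in Hj. simpl in Hj. unfold cut_mean; simpl.
  pose proof (max_mean_ge a1 b1). pose proof (max_mean_ge (a - a1) (b - b1)).
  pose proof (B_nonneg k sc B sc_bounded). destruct Hj as [Ha1 [Hb1 [Hs|Hs]]].
  - rewrite Hs in *. replace (a - a1 + (b - b1))%nat with m in * by lia. lra.
  - rewrite Hs in *. replace (a - a1 + (b - b1))%nat with (m - 1)%nat in * by lia.
    pose proof (max_mean_snoc m). pose proof (max_mean_super (m - 1) 1).
    replace (m - 1 + 1)%nat with m in * by lia. pose proof max_mean_one. lra.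
Qed.

(* A real number Z below EZ + W is below m + t + W exp(s (Z - EZ - t)) when
   EZ <= m: the exponential term pays for deviations beyond t. *)
Lemma exp_deviation_bound Z EZ m W t s :
  EZ <= m -> Z <= EZ + W -> 0 <= t -> 0 <= s -> 0 <= W ->
  Z <= m + t + W * exp (s * (Z - EZ - t)).
Proof.
  intros H1 H2 Ht Hs HW. destruct (Rle_dec (Z - EZ - t) 0).
  - pose proof (exp_pos (s * (Z - EZ - t))). nra.
  - assert (1 <= exp (s * (Z - EZ - t))).
    { pose proof (exp_ineq1_le (s * (Z - EZ - t))). nra. }
    nra.
Qed.

Lemma doubling_pointwise a b m s t x y :
  (a + b = 2 * m)%nat -> (1 <= m)%nat -> 0 <= s -> 0 <= t ->
  length x = a -> length y = b -> is_word k x -> is_word k y ->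
  LS sc x y <= 2 * max_mean m + 3 * B + t + INR (a + b) * Sdelta k sc *
    sumR (map (fun j => exp (s * (cut_score (fst j) (snd j) x y - cut_mean a b j - t))) (cuts a b m)).
Proof.
  intros Hab Hm Hs Ht Hx Hy Gx Gy. subst a b.
  assert (HD : 0 <= Sdelta k sc).
  { pose proof (Sdelta_bound k sc None None None (in_Astar_None k) (in_Astar_None k) (in_Astar_None k)).
    pose proof (Rabs_pos (sc None None - sc None None)). lra. }
  apply (LS_cutT sc x y m); [lia|]. intros a1 b1 Ha1 Hb1 Hs1.
  assert (Hin : In (a1, b1) (cuts (length x) (length y) m)) by (apply cuts_in; lia).
  eapply Rle_trans.
  - apply (exp_deviation_bound (cut_score a1 b1 x y) (cut_mean (length x) (length y) (a1, b1))
             (2 * max_mean m + 3 * B) (INR (length x + length y) * Sdelta k sc) t s);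
      auto using cut_mean_le.
    + pose proof (Ew_oscillation k p p_nonneg p_sum (length x + length y) _ _
        (cut_score_bounded_diff (length x) a1 b1) (x ++ y)) as Ho.
      pose proof (cut_score_mean (length x) (length y) (a1, b1)) as Hmean. simpl in Hmean.
      rewrite Hmean in Ho by lia.
      rewrite firstn_len_app, skipn_len_app in Ho.
      apply Ho; [rewrite length_app; lia | apply is_word_app; auto].
    + apply Rmult_le_pos; [apply pos_INR | auto].
  - apply Rplus_le_compat_l, Rmult_le_compat_l; [apply Rmult_le_pos; [apply pos_INR | auto]|].
    apply (sumR_ge_term (fun j => exp (s * (cut_score (fst j) (snd j) x y -
                                   cut_mean (length x) (length y) j - t))) _ (a1, b1));
      auto. intros; left; apply exp_pos.
Qed.

Lemma doubling_exp_term a b j s t : (fst j <= a)%nat -> (snd j <= b)%nat ->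
  0 <= s -> s * Sdelta k sc <= 0.2 ->
  Ew k p a (fun x => Ew k p b (fun y => exp (s * (cut_score (fst j) (snd j) x y - cut_mean a b j - t)))) <=
  exp (- (s * t)) * exp (0.9 * INR (a + b) * (s * s * (Sdelta k sc * Sdelta k sc))).
Proof.
  intros Ha Hb Hs HsD. set (g := fun w => cut_score (fst j) (snd j) (firstn a w) (skipn a w)).
  rewrite <- (Ew_prod k p a b (fun x y => exp (s * (cut_score (fst j) (snd j) x y - cut_mean a b j - t)))).
  rewrite (Ew_ext k p (a + b) _ (fun w => exp (- (s * t)) *
             exp (s * (Ew k p (a + b) (fun w => - g w) - (- g w))))).
  2:{ intros w _ _. rewrite <- exp_plus, Ew_opp. unfold g. rewrite cut_score_mean by auto.
      f_equal. ring. }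
  rewrite Ew_scal. apply Rmult_le_compat_l; [left; apply exp_pos|].
  apply Ew_exp_moment; auto. apply bounded_diff_opp, cut_score_bounded_diff.
Qed.

Lemma doubling m s t :
  (1 <= m)%nat -> 0 <= s -> s * Sdelta k sc <= 0.2 -> 0 <= t ->
  max_mean (2 * m) <= 2 * max_mean m + 3 * B + t +
     INR (2 * m) * Sdelta k sc * (INR (S (2 * m)) * INR (S (2 * m))) *
     (exp (- (s * t)) * exp (0.9 * INR (2 * m) * (s * s * (Sdelta k sc * Sdelta k sc)))).
Proof.
  intros Hm Hs HsD Ht. apply max_mean_le. intros a Ha. set (b := (2 * m - a)%nat).
  assert (Hab : (a + b = 2 * m)%nat) by (unfold b; lia). rewrite <- Hab.
  set (Q := exp (- (s * t)) * exp (0.9 * INR (a + b) * (s * s * (Sdelta k sc * Sdelta k sc)))).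
  set (F := fun j x y => exp (s * (cut_score (fst j) (snd j) x y - cut_mean a b j - t))).
  unfold mean_score. eapply Rle_trans.
  { apply Ew_le; auto. intros x Hx Gx. apply Ew_le; auto. intros y Hy Gy.
    apply (doubling_pointwise a b m s t); auto. }
  rewrite (Ew_ext k p a _ (fun x => (2 * max_mean m + 3 * B + t) + INR (a + b) * Sdelta k sc *
             sumR (map (fun j => Ew k p b (F j x)) (cuts a b m))))
    by (intros; apply Ew_affine_sum; auto).
  rewrite Ew_affine_sum by auto.
  match goal with |- _ <= ?c + ?X * (?Y * ?Y) * ?Z =>
    replace (c + X * (Y * Y) * Z) with (c + X * (Y * Y * Z)) by ring end.
  apply Rplus_le_compat_l, Rmult_le_compat_l.
  { apply Rmult_le_pos; [apply pos_INR|]. eapply Rle_trans; [apply Rabs_pos|].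
    apply (Sdelta_bound k sc None None None); apply in_Astar_None. }
  eapply Rle_trans.
  { apply (sumR_map_le _ (fun _ => Q)). intros j Hj. apply cuts_inv in Hj.
    apply doubling_exp_term; auto; lia. }
  rewrite sumR_const. apply Rmult_le_compat_r; [unfold Q; left; apply Rmult_lt_0_compat; apply exp_pos|].
  rewrite <- mult_INR. apply le_INR. eapply Nat.le_trans; [apply cuts_length|]. apply Nat.mul_le_mono; lia.
Qed.


Lemma doubling_gaussian m t :
  (1 <= m)%nat -> 0 < Sdelta k sc -> 0 <= t -> t <= 0.36 * INR (2 * m) * Sdelta k sc ->
  max_mean (2 * m) <= 2 * max_mean m + 3 * B + t +
     INR (2 * m) * Sdelta k sc * (INR (S (2 * m)) * INR (S (2 * m))) *
     exp (- (t * t / (3.6 * INR (2 * m) * (Sdelta k sc * Sdelta k sc)))).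
Proof.
  intros Hm HD Ht HtN.
  assert (HN : 0 < INR (2 * m)) by (apply lt_0_INR; lia).
  destruct (chernoff_exponent _ _ t HN HD Ht HtN) as [s [Hs [HsD <-]]].
  apply doubling; auto.
Qed.

(* With t = sqrt m ln m / 280 the error term of the
   doubling inequality is at most 1 once ln m exceeds [ln_threshold], so
   max_mean m / m + corr m does not increase along doublings m -> 2m. *)

Lemma doubling_step m :
  (1 <= m)%nat -> 0 < Sdelta k sc ->
  ln_threshold B (Sdelta k sc) <= ln (INR m) -> ln (INR m) <= 201.6 * Sdelta k sc * sqrt (INR m) ->
  max_mean (2 * m) <= 2 * max_mean m + 3 * B + sqrt (INR m) * ln (INR m) / 280 + 1.
Proof.
  intros Hm HD HLs HLr.
  set (D := Sdelta k sc) in *. set (L := ln (INR m)) in *. set (r := sqrt (INR m)) in *.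
  pose proof (INR_ge_1 m Hm) as Hm1.
  assert (Hr2 : r * r = INR m) by (apply sqrt_sqrt; lra).
  assert (Hr1 : 1 <= r) by (unfold r; rewrite <- sqrt_1; apply sqrt_le_1_alt; lra).
  assert (HL1 : 1 <= L) by (eapply Rle_trans; [apply Rmax_l | exact HLs]).
  set (c := / 280 * / 280 / (7.2 * (D * D))).
  assert (Hc : 0 < c) by (unfold c; apply Rdiv_lt_0_compat; nra).
  assert (HLc : (3 + Rabs (ln (18 * D))) / c <= L).
  { eapply Rle_trans; [|exact HLs]. unfold ln_threshold.
    eapply Rle_trans; [|apply Rmax_r]. apply Rmax_l. }
  assert (H2m : INR (2 * m) = 2 * (r * r)) by (rewrite mult_INR, Hr2; simpl; lra).
  pose proof (doubling_gaussian m (r * L / 280) Hm HD) as Hdb.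
  rewrite H2m in Hdb.
  assert (Hexp : - (r * L / 280 * (r * L / 280) / (3.6 * (2 * (r * r)) * (D * D))) = - (c * L * L)).
  { unfold c. replace 3.6 with (36 / 10) by lra. replace 7.2 with (72 / 10) by lra. field. nra. }
  fold D in Hdb. rewrite Hexp in Hdb.
  assert (Hpoly : 2 * (r * r) * D * (INR (S (2 * m)) * INR (S (2 * m))) <= 18 * D * exp (3 * L)).
  { replace (3 * L) with (L + L + L) by ring. rewrite !exp_plus. unfold L. rewrite exp_ln by lra.
    rewrite S_INR, H2m, Hr2.
    assert (0 <= (2 * INR m + 1) * (2 * INR m + 1) <= 9 * (INR m * INR m)) by (split; nra).
    assert (0 <= 2 * INR m * D) by nra. nra. }
  pose proof (poly_exp_small D L c _ HD Hc HL1 HLc Hpoly).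
  enough (max_mean (2 * m) <= 2 * max_mean m + 3 * B + r * L / 280 + 1) by (unfold r, L in *; lra).
  apply (Rle_trans _ _ _ (Hdb ltac:(nra) ltac:(nra))). lra.
Qed.

Lemma normalized_decrease m :
  (1 <= m)%nat -> 0 < Sdelta k sc ->
  ln_threshold B (Sdelta k sc) <= ln (INR m) -> ln (INR m) <= 201.6 * Sdelta k sc * sqrt (INR m) ->
  max_mean (2 * m) / INR (2 * m) + corr (2 * m) <= max_mean m / INR m + corr m.
Proof.
  intros Hm HD HLs HLr. pose proof (doubling_step m Hm HD HLs HLr) as Hstep.
  pose proof (corr_double m Hm) as Hcorr.
  set (L := ln (INR m)) in *. set (r := sqrt (INR m)) in *.
  pose proof (INR_ge_1 m Hm) as Hm1.
  assert (Hr2 : r * r = INR m) by (apply sqrt_sqrt; lra).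
  assert (Hr1 : 1 <= r) by (unfold r; rewrite <- sqrt_1; apply sqrt_le_1_alt; lra).
  assert (HLB : (280 * (3 * B + 1) + 10) / 3 <= L).
  { eapply Rle_trans; [|exact HLs]. unfold ln_threshold.
    eapply Rle_trans; [|apply Rmax_r]. apply Rmax_r. }
  pose proof (B_nonneg k sc B sc_bounded).
  change (corr m) with (L / (40 * r)). rewrite mult_INR. simpl (INR 2). rewrite <- Hr2.
  assert (E1 : max_mean (2 * m) / ((1 + 1) * (r * r)) <=
               max_mean m / (r * r) + (3 * B + r * L / 280 + 1) / (2 * (r * r))).
  { replace (max_mean m / (r * r) + (3 * B + r * L / 280 + 1) / (2 * (r * r))) with
      ((2 * max_mean m + 3 * B + r * L / 280 + 1) / ((1 + 1) * (r * r))) by (field; lra).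
    apply Rmult_le_compat_r; [left; apply Rinv_0_lt_compat; nra | lra]. }
  assert (E2 : (3 * B + r * L / 280 + 1) / (2 * (r * r)) + (1 + L) / (56 * r) <= L / (40 * r)).
  { apply Rmult_le_reg_r with (2 * (r * r)); [nra|].
    replace (((3 * B + r * L / 280 + 1) / (2 * (r * r)) + (1 + L) / (56 * r)) * (2 * (r * r)))
      with (3 * B + 1 + r * L / 280 + r * (1 + L) / 28) by (field; lra).
    replace (L / (40 * r) * (2 * (r * r))) with (r * L / 20) by (field; lra).
    assert (3 * B + 1 <= (3 * B + 1) * r) by nra. nra. }
  lra.
Qed.

Lemma iterated_decrease m0 :
  (forall m, (m0 <= m)%nat ->
     max_mean (2 * m) / INR (2 * m) + corr (2 * m) <= max_mean m / INR m + corr m) ->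
  forall m j, (m0 <= m)%nat ->
  max_mean (2 ^ j * m) / INR (2 ^ j * m) + corr (2 ^ j * m) <= max_mean m / INR m + corr m.
Proof.
  intros Hd m j Hm. induction j as [|j IH].
  - simpl. rewrite Nat.add_0_r. lra.
  - replace (2 ^ S j * m)%nat with (2 * (2 ^ j * m))%nat by (simpl; lia).
    eapply Rle_trans; [apply Hd | exact IH].
    assert (2 ^ j <> 0)%nat by (apply Nat.pow_nonzero; lia). nia.
Qed.

Lemma cv_upper (u : nat -> R) l c (g : nat -> nat) :
  Un_cv u l -> (forall j, u (g j) <= c) -> (forall N, exists j, (N <= g j)%nat) -> l <= c.
Proof.
  intros Hu Hg Hinf. destruct (Rle_dec l c) as [|Hc]; auto. exfalso.
  destruct (Hu (l - c)) as [N HN]; [lra|]. destruct (Hinf N) as [j Hj].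
  specialize (HN _ Hj). specialize (Hg j). unfold Rdist in HN.
  apply Rabs_def2 in HN. lra.
Qed.

(* Indeed lambda_{2^j m} <= 2 max_mean (2^{j+1} m) / 2^{j+1} m, which is at
   most 2 (max_mean m / m + corr m) <= E L_m / m + 2 corr m. *)
Lemma mean_limit_bound lam m0 m :
  Un_cv (lambda_n k p sc) lam ->
  (forall m, (m0 <= m)%nat ->
     max_mean (2 * m) / INR (2 * m) + corr (2 * m) <= max_mean m / INR m + corr m) ->
  (m0 <= m)%nat -> (1 <= m)%nat ->
  lam <= mean_score m m / INR m + 2 * corr m.
Proof.
  intros Hcv Hd Hm0 Hm1.
  apply (cv_upper _ _ _ (fun j => (2 ^ j * m)%nat) Hcv).
  - intros j. set (n := (2 ^ j * m)%nat).
    assert (Hn : (1 <= n)%nat) by (unfold n; assert (2 ^ j <> 0)%nat by (apply Nat.pow_nonzero; lia); nia).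
    pose proof (INR_ge_1 n Hn). pose proof (INR_ge_1 m Hm1).
    unfold lambda_n. rewrite Expect_Ew. fold (mean_score n n).
    pose proof (max_mean_ge n n) as H1.
    pose proof (iterated_decrease m0 Hd m (S j) Hm0) as H2.
    replace (2 ^ S j * m)%nat with (n + n)%nat in H2 by (unfold n; simpl; lia).
    pose proof (corr_nonneg (n + n) ltac:(lia)) as H3.
    pose proof (max_mean_half m) as H4.
    rewrite plus_INR in H2.
    assert (mean_score n n / INR n <= 2 * (max_mean (n + n) / (INR n + INR n))).
    { replace (2 * (max_mean (n + n) / (INR n + INR n))) with (max_mean (n + n) / INR n) by (field; lra).
      apply Rmult_le_compat_r; [left; apply Rinv_0_lt_compat; lra | exact H1]. }
    assert (max_mean m / INR m <= mean_score m m / INR m / 2).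
    { replace (mean_score m m / INR m / 2) with (mean_score m m / 2 / INR m) by (field; lra).
      apply Rmult_le_compat_r; [left; apply Rinv_0_lt_compat; lra | exact H4]. }
    lra.
  - intros N. exists N. assert (N <= 2 ^ N)%nat by (apply Nat.lt_le_incl, Nat.pow_gt_lin_r; lia). nia.
Qed.

Lemma eventually_decreasing : 0 < Sdelta k sc ->
  exists m0, (1 <= m0)%nat /\ forall m, (m0 <= m)%nat ->
    max_mean (2 * m) / INR (2 * m) + corr (2 * m) <= max_mean m / INR m + corr m.
Proof.
  intros HD.
  destruct (eventually_ln_ge (ln_threshold B (Sdelta k sc))) as [K1 HK1].
  destruct (eventually_ln_le_sqrt (201.6 * Sdelta k sc)) as [K2 HK2]; [lra|].
  exists (Nat.max 1 (Nat.max K1 K2)). split; [lia|]. intros m Hm.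
  apply normalized_decrease; [lia | exact HD | apply HK1; lia | apply HK2; lia].
Qed.

(* Concentration of L_n: by the lower-tail bound applied to the 2n letters
   of (X,Y), L_n / n stays above theta except with Gaussian-small probability
   as soon as n theta lies t below the mean E L_n. *)
Lemma LS_lower_tail n theta t :
  (1 <= n)%nat -> 0 < Sdelta k sc -> 0 <= t -> t <= 0.36 * INR (n + n) * Sdelta k sc ->
  INR n * theta <= mean_score n n - t ->
  1 - exp (- (t * t / (3.6 * INR (n + n) * (Sdelta k sc * Sdelta k sc)))) <=
  Prob k p n (fun X Y => Rge_b (LS sc X Y / INR n) theta).
Proof.
  intros Hn HD Ht HtN Htheta. pose proof (INR_ge_1 n Hn) as Hn1.
  set (g := fun w => LS sc (firstn n w) (skipn n w)).
  assert (Hmean : Ew k p (n + n) g = mean_score n n) by apply Ew_prod.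
  unfold Prob. rewrite Expect_Ew,
    <- (Ew_prod k p n n (fun X Y => if Rge_b (LS sc X Y / INR n) theta then 1 else 0)).
  apply (Ew_lower_tail k p p_nonneg p_sum (n + n) g (Sdelta k sc) t); [| lia | auto.. ].
  - apply (bounded_diff_blocks k (LS sc)); intros.
    + apply LS_bounded_diff_left; auto.
    + apply LS_bounded_diff_right; auto.
  - intros w _ _. destruct (Rge_b _ _); lra.
  - intros w _ _ Hw. rewrite Hmean in Hw. unfold Rge_b.
    destruct (Rle_dec theta (LS sc (firstn n w) (skipn n w) / INR n)) as [|Hlt]; [lra|].
    exfalso. apply Hlt. apply (Rmult_le_reg_r (INR n)); [lra|].
    unfold g in Hw. unfold Rdiv. rewrite Rmult_assoc, Rinv_l by lra. lra.
Qed.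

(* At any n where the convergence rate bound holds and ln n <= 0.75 D sqrt n,
   the event L_n / n >= lambda - ln n / sqrt n has the claimed probability:
   it can only fail when L_n is 0.95 sqrt n ln n below its mean. *)
Lemma lower_tail_at lam n :
  (1 <= n)%nat -> 0 < Sdelta k sc -> ln (INR n) <= 0.75 * Sdelta k sc * sqrt (INR n) ->
  lam <= mean_score n n / INR n + 2 * corr n ->
  1 - Rpower (INR n) (- ((1 / (8 * (Sdelta k sc) ^ 2)) * ln (INR n))) <=
  Prob k p n (fun X Y => Rge_b (LS sc X Y / INR n) (lam - ln (INR n) / sqrt (INR n))).
Proof.
  intros Hn HD HLr Hlam. pose proof (INR_ge_1 n Hn). unfold corr in Hlam.
  eapply Rle_trans; [apply Rplus_le_compat_l, Ropp_le_contravar, tail_exponent; auto|].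
  set (D := Sdelta k sc) in *. set (L := ln (INR n)) in *. set (r := sqrt (INR n)) in *.
  assert (Hr2 : r * r = INR n) by (apply sqrt_sqrt; lra).
  assert (Hr1 : 1 <= r) by (unfold r; rewrite <- sqrt_1; apply sqrt_le_1_alt; lra).
  assert (HL : 0 <= L) by (unfold L; rewrite <- ln_1; apply ln_le_mono; lra).
  apply LS_lower_tail; [lia | exact HD | | |]; fold r L D.
  - apply Rmult_le_pos; [lra | exact HL].
  - rewrite plus_INR, <- Hr2. assert (0 < r * D) by nra. nra.
  - apply (Rmult_le_compat_l (INR n)) in Hlam; [|lra].
    replace (INR n * (mean_score n n / INR n + 2 * (L / (40 * r))))
      with (mean_score n n + r * L / 20) in Hlam by (rewrite <- Hr2; field; lra).
    replace (INR n * (lam - L / r)) with (INR n * lam - r * L) by (rewrite <- Hr2; field; lra). lra.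
Qed.

End MeanScores.

Theorem mainTheorem5 (k : nat) (p : nat -> R) (sc : option nat -> option nat -> R) :
  (1 <= k)%nat ->
  (forall i, (i < k)%nat -> 0 <= p i) ->
  sumR (map p (seq 0 k)) = 1 ->
  (forall c d, In c (Astar k) -> In d (Astar k) -> sc c d = sc d c) ->
  Sdelta k sc > 0 ->
  forall lam : R, Un_cv (lambda_n k p sc) lam ->
  exists N : nat, forall n : nat, (N <= n)%nat ->
    Prob k p n (fun X Y => Rge_b (LS sc X Y / INR n) (lam - ln (INR n) / sqrt (INR n)))
      >= 1 - Rpower (INR n) (- ((1 / (8 * (Sdelta k sc) ^ 2)) * ln (INR n))).
Proof.
  intros Hk Hp Hs Hsym HD lam Hcv.
  destruct (score_bounded k sc) as [B HB].
  destruct (eventually_decreasing k p sc Hk Hp Hs Hsym B HB HD) as [m0 [Hm0 Hdec]].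
  destruct (eventually_ln_le_sqrt (0.75 * Sdelta k sc)) as [K HK]; [lra|].
  exists (Nat.max m0 K). intros n Hn. apply Rle_ge.
  apply (lower_tail_at k p sc Hk Hp Hs Hsym); [lia | exact HD | apply HK; lia |].
  apply (mean_limit_bound k p sc Hk Hp Hs Hsym lam m0 n Hcv Hdec); lia.
Qed.
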